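(* Let $\gamma>1$, $J>0$, $S_0>0$ be constants, put $u_s:=(\gamma S_0J^{\gamma-1})^{1/(\gamma+1)}$, let $\bar u_i>0$ and $\bar\rho_i:=J/\bar u_i$, and assume $\zeta_0:=\bar u_i/u_s>1$. Define, for $u>0$, $$H(u):=\int_{u_s}^{u}\frac{J}{\bar u_i\,t^{\gamma+1}}\,(t^{\gamma+1}-u_s^{\gamma+1})(\bar u_i-t)\,dt,$$ and let $\mathcal T_{\rm acc}:=\{(u,E): u>0,\ \tfrac12E^2-H(u)=0,\ (u-u_s)E\ge 0\}$. Then for any fixed $(u_0,E_0)\in\mathcal T_{\rm acc}$ with $u_0<u_s$, there exists a finite constant $l_{\max}>0$ depending only on $(\gamma,J,S_0,\bar u_i,u_0)$ such that the initial value problem $$\bar u_1'=\frac{\bar E\,\bar u_1^{\gamma}}{\bar u_1^{\gamma+1}-u_s^{\gamma+1}},\qquad \bar E'=\frac{J}{\bar u_1}-\bar\rho_i\quad (x_1>0),\qquad (\bar u_1,\bar E)(0)=(u_0,E_0)$$ has a unique smooth solution for $x_1\in[0,l_{\max})$ satisfying: (i) $\bar u_1'(x_1)>0$ on $[0,l_{\max})$; (ii) $\lim_{x_1\to l_{\max}-}\bar u_1'(x_1)=0$; (iii) $\mathcal T_{\rm acc}\cap\{(\bar u_1,\bar E)(x_1):0\le x_1\le l_{\max}\}=\mathcal T_{\rm acc}\cap\{(u,E):u\ge u_0\}$; (iv) there exists a unique constant $\ell_s\in(0,l_{\max})$, depending only on $(\gamma,J,S_0,\bar u_i,u_0)$,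 such that $\bar u_1(x_1)<u_s$ for $x_1<\ell_s$, $\bar u_1(\ell_s)=u_s$, and $\bar u_1(x_1)>u_s$ for $x_1>\ell_s$. *)

From Stdlib Require Export Reals.
From Coquelicot Require Export Coquelicot.
Open Scope R_scope.

Definition u_s (gamma J S0 : R) : R :=
  Rpower (gamma * S0 * Rpower J (gamma - 1)) (1 / (gamma + 1)).

Definition H_fun (gamma J S0 ubi : R) (u : R) : R :=
  RInt (fun t => J / (ubi * Rpower t (gamma + 1))
                 * (Rpower t (gamma + 1) - Rpower (u_s gamma J S0) (gamma + 1))
                 * (ubi - t))
       (u_s gamma J S0) u.

Definition T_acc (gamma J S0 ubi : R) (u E : R) : Prop :=
  0 < u /\ E ^ 2 / 2 - H_fun gamma J S0 ubi u = 0 /\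
  0 <= (u - u_s gamma J S0) * E.

Definition has_deriv_within (A : R -> Prop) (f : R -> R) (x l : R) : Prop :=
  filterlim (fun y => (f y - f x) / (y - x))
            (within (fun y => A y /\ y <> x) (locally x)) (locally l).

Definition smooth_on (A : R -> Prop) (f : R -> R) : Prop :=
  exists D : nat -> R -> R,
    (forall x, A x -> D O x = f x) /\
    (forall (n : nat) x, A x -> has_deriv_within A (D n) x (D (S n) x)).

Definition Ico (a b : R) (x : R) : Prop := a <= x < b.

(* (u,E) is a smooth (positive) solution of the IVP on [0,l).
   The u-equation is imposed where its right-hand side is defined (u <> u_s). *)
Definition is_solution (gamma J S0 ubi u0 E0 l : R) (u E : R -> R) : Prop :=
  smooth_on (Ico 0 l) u /\ smooth_on (Ico 0 l) E /\
  (forall x, 0 <= x < l -> 0 < u x) /\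
  u 0 = u0 /\ E 0 = E0 /\
  (forall x, 0 < x < l -> u x <> u_s gamma J S0 ->
     is_derive u x (E x * Rpower (u x) gamma /
                    (Rpower (u x) (gamma + 1) - Rpower (u_s gamma J S0) (gamma + 1)))) /\
  (forall x, 0 < x < l -> is_derive E x (J / u x - J / ubi)).

(* On [T_acc] the energy relation [E^2/2 = H(u)] with the sign condition selects the branch
   [E = E_of u := (u - u_s) sqrt (2 K u)], where [K = H / (u - u_s)^2] is smooth and positive
   on [(0, umax)]: [H] has a double zero at the sonic point [u_s] and its next zero [umax]
   lies beyond [ubi].  On this branch the equation for [u] becomes [u' = du_of u :=
   sqrt (2 K u) u^gamma / M u] with [M u = (u^(gamma+1) - u_s^(gamma+1)) / (u - u_s)], which
   is smooth and positive across [u_s].  The solution is therefore the inverse of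
   [x_of w = ∫_{u0}^{w} dt / du_of t]; since [du_of] vanishes like [sqrt (umax - u)], [x_of]
   stays bounded and [lmax = sup x_of] is finite.  Uniqueness: a solution conserves
   [F^2 - 2 H(v)], hence stays on the branch while [v <> u_s], so [x_of (v y) - y] is
   constant; it crosses [u_s] because there [v' > 0] and [F' > 0]. *)

From Stdlib Require Import Lra Lia Classical ClassicalEpsilon.
Open Scope R_scope.

Lemma is_derive_eps (f : R -> R) (x l : R) : is_derive f x l <->
  forall e, 0 < e -> exists d, 0 < d /\ forall y, y <> x -> Rabs (y - x) < d ->
    Rabs ((f y - f x) / (y - x) - l) < e.
Proof.
  rewrite is_derive_Reals. split.
  - intros H e He. destruct (H e He) as [d Hd]. exists d. split; [apply cond_pos|].
    intros y Hy1 Hy2. specialize (Hd (y - x)). replace (x + (y - x)) with y in Hd by ring.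
    apply Hd; [lra | exact Hy2].
  - intros H e He. destruct (H e He) as [d [Hd H1]]. exists (mkposreal d Hd).
    intros k Hk1 Hk2. specialize (H1 (x + k)). replace (x + k - x) with k in H1 by ring.
    apply H1; [lra | exact Hk2].
Qed.

Lemma has_deriv_within_eps (A : R -> Prop) (f : R -> R) (x l : R) :
  has_deriv_within A f x l <->
  forall e, 0 < e -> exists d, 0 < d /\ forall y, A y -> y <> x -> Rabs (y - x) < d ->
    Rabs ((f y - f x) / (y - x) - l) < e.
Proof.
  unfold has_deriv_within. rewrite filterlim_locally. split.
  - intros H e He. destruct (H (mkposreal e He)) as [d Hd]. exists d. split; [apply cond_pos|].
    intros y Ay Hyx Hy. apply Hd; [exact Hy | tauto].
  - intros H e. destruct (H e (cond_pos e)) as [d [Hd H1]]. exists (mkposreal d Hd).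
    intros y Hy [Ay Hyx]. apply H1; auto.
Qed.

Lemma is_derive_eq (f g : R -> R) (x l l' : R) :
  is_derive f x l -> (forall y, f y = g y) -> l = l' -> is_derive g x l'.
Proof. intros H Hfg <-. exact (is_derive_ext f g x l Hfg H). Qed.

Lemma is_derive_val_unique (f : R -> R) (x l1 l2 : R) :
  is_derive f x l1 -> is_derive f x l2 -> l1 = l2.
Proof. intros H1 H2. rewrite <- (is_derive_unique f x l1 H1). exact (is_derive_unique f x l2 H2). Qed.

Lemma is_derive_within (A : R -> Prop) (f : R -> R) (x l : R) :
  is_derive f x l -> has_deriv_within A f x l.
Proof.
  rewrite is_derive_eps, has_deriv_within_eps. intros H e He.
  destruct (H e He) as [d [Hd H1]]. exists d. auto.
Qed.

Lemma has_deriv_within_interior (A : R -> Prop) (f : R -> R) (x l r : R) :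
  0 < r -> (forall y, Rabs (y - x) < r -> A y) ->
  has_deriv_within A f x l -> is_derive f x l.
Proof.
  intros Hr HA. rewrite is_derive_eps, has_deriv_within_eps. intros H e He.
  destruct (H e He) as [d [Hd H1]]. exists (Rmin d r). split; [apply Rmin_pos; auto|].
  intros y Hyx Hy. pose proof (Rmin_l d r). pose proof (Rmin_r d r).
  apply H1; auto; [apply HA|]; lra.
Qed.

Lemma has_deriv_within_continuous (A : R -> Prop) (f : R -> R) (x l : R) :
  has_deriv_within A f x l -> filterlim f (within A (locally x)) (locally (f x)).
Proof.
  rewrite has_deriv_within_eps. intros H. apply filterlim_locally. intros [e He].
  destruct (H 1 Rlt_0_1) as [d [Hd H1]].
  set (c := Rabs l + 1). assert (Hc : 0 < c) by (pose proof (Rabs_pos l); unfold c; lra).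
  exists (mkposreal (Rmin d (e / c)) (Rmin_pos _ _ Hd (Rdiv_lt_0_compat _ _ He Hc))).
  intros y Hy Ay. change (Rabs (y - x) < Rmin d (e / c)) in Hy. change (Rabs (f y - f x) < e).
  pose proof (Rmin_l d (e / c)). pose proof (Rmin_r d (e / c)) as Hmin.
  destruct (Req_dec y x) as [->|Hyx]; [rewrite Rminus_eq_0, Rabs_R0; exact He|].
  specialize (H1 y Ay Hyx ltac:(lra)).
  assert (Hq : Rabs ((f y - f x) / (y - x)) < c).
  { pose proof (Rabs_triang_inv ((f y - f x) / (y - x)) l). unfold c. lra. }
  replace (f y - f x) with ((f y - f x) / (y - x) * (y - x)) by (field; lra).
  rewrite Rabs_mult. apply Rle_lt_trans with (c * Rabs (y - x)).
  - apply Rmult_le_compat_r; [apply Rabs_pos | lra].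
  - apply (Rmult_lt_reg_r (/ c)); [apply Rinv_0_lt_compat; lra|].
    replace (c * Rabs (y - x) * / c) with (Rabs (y - x)) by (field; lra). exact (Rlt_le_trans _ _ _ Hy Hmin).
Qed.

Lemma is_derive_continuity_pt (f : R -> R) (x l : R) : is_derive f x l -> continuity_pt f x.
Proof.
  intros H. apply derivable_continuous_pt. exists l. apply is_derive_Reals. exact H.
Qed.

Lemma is_derive_continuous (f : R -> R) (x l : R) : is_derive f x l -> continuous f x.
Proof. intros H. apply continuity_pt_filterlim. exact (is_derive_continuity_pt f x l H). Qed.

Lemma derive_neg_lt (f df : R -> R) (a b : R) : a < b ->
  (forall x, a <= x <= b -> is_derive f x (df x)) -> (forall x, a < x < b -> df x < 0) ->
  f b < f a.
Proof.
  intros Hab Hd Hneg. destruct (MVT_cor2 f df a b Hab) as [c [Hc Hcab]].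
  - intros c Hc. apply is_derive_Reals, Hd, Hc.
  - specialize (Hneg c Hcab). assert (df c * (b - a) < 0) by (apply Rmult_neg_pos; lra). lra.
Qed.

Lemma derive_nonpos_le (f df : R -> R) (a b : R) : a <= b ->
  (forall x, a <= x <= b -> is_derive f x (df x)) -> (forall x, a <= x <= b -> df x <= 0) ->
  f b <= f a.
Proof.
  intros Hab Hd Hneg. destruct (Req_dec a b) as [->|Hne]; [lra|].
  destruct (MVT_cor2 f df a b ltac:(lra)) as [c [Hc Hcab]].
  - intros c Hc. apply is_derive_Reals, Hd, Hc.
  - specialize (Hneg c ltac:(lra)). assert (df c * (b - a) <= 0) by (apply Rmult_le_0_r; lra). lra.
Qed.

Lemma derive_pos_lt (f df : R -> R) (a b : R) : a < b ->
  (forall x, a <= x <= b -> is_derive f x (df x)) -> (forall x, a < x < b -> 0 < df x) ->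
  f a < f b.
Proof.
  intros Hab Hd Hpos. enough (- f b < - f a) by lra.
  apply (derive_neg_lt (fun x => - f x) (fun x => - df x)); auto.
  - intros x Hx. apply (is_derive_opp f), Hd, Hx.
  - intros x Hx. specialize (Hpos x Hx). lra.
Qed.

Lemma derive_pos_lt_iff (f df : R -> R) (a b : R) :
  (forall w, a < w < b -> is_derive f w (df w) /\ 0 < df w) ->
  forall v w, a < v < b -> a < w < b -> (f v < f w <-> v < w).
Proof.
  intros Hf v w Hv Hw. split; intros Hlt.
  - destruct (Rtotal_order v w) as [|[->|Hwv]]; [assumption|lra|].
    enough (f w < f v) by lra.
    apply (derive_pos_lt f df); [exact Hwv | intros x Hx; apply Hf; lra | intros x Hx; apply Hf; lra].
  - apply (derive_pos_lt f df); [exact Hlt | intros x Hx; apply Hf; lra | intros x Hx; apply Hf; lra].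
Qed.

Lemma segment_in (lo hi a b : R) : lo < a < hi -> lo < b < hi ->
  forall z, Rmin a b <= z <= Rmax a b -> lo < z < hi.
Proof. intros Ha Hb z Hz. unfold Rmin, Rmax in Hz. destruct (Rle_dec a b); lra. Qed.

Lemma derive_zero_eq (f : R -> R) (a b : R) :
  (forall x, a < x < b -> is_derive f x 0) -> forall x y, a < x < b -> a < y < b -> f x = f y.
Proof.
  intros Hd x y Hx Hy. destruct (MVT_gen f x y (fun _ => 0)) as [c [_ Hc]].
  - intros z Hz. apply Hd, (segment_in a b x y Hx Hy). lra.
  - intros z Hz. apply (is_derive_continuity_pt f z 0), Hd, (segment_in a b x y Hx Hy z Hz).
  - lra.
Qed.

Lemma filterlim_Rplus {T : Type} {F : (T -> Prop) -> Prop} {FF : Filter F}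
  (f g : T -> R) (a b : R) :
  filterlim f F (locally a) -> filterlim g F (locally b) ->
  filterlim (fun x => f x + g x) F (locally (a + b)).
Proof. intros Hf Hg. exact (filterlim_comp_2 f g Rplus Hf Hg (filterlim_plus a b)). Qed.

Lemma filterlim_Rmult {T : Type} {F : (T -> Prop) -> Prop} {FF : Filter F}
  (f g : T -> R) (a b : R) :
  filterlim f F (locally a) -> filterlim g F (locally b) ->
  filterlim (fun x => f x * g x) F (locally (a * b)).
Proof. intros Hf Hg. exact (filterlim_comp_2 f g Rmult Hf Hg (filterlim_mult a b)). Qed.

Lemma filterlim_eventually_eq {T : Type} {F : (T -> Prop) -> Prop} {FF : ProperFilter F}
  (f g : T -> R) (a b : R) :
  F (fun x => f x = g x) -> filterlim f F (locally a) -> filterlim g F (locally b) -> a = b.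
Proof.
  intros Hfg Hf Hg.
  apply (@filterlim_locally_unique T R_AbsRing R_NormedModule F (Proper_StrongProper F FF) g);
    [exact (filterlim_ext_loc f g Hfg Hf) | exact Hg].
Qed.

Lemma at_right_le_within (A : R -> Prop) (t b : R) :
  t < b -> (forall y, t < y < b -> A y) -> filter_le (at_right t) (within A (locally t)).
Proof.
  intros Htb HA P HP. unfold within in HP. assert (Hr : 0 < b - t) by lra.
  unfold at_right, within. generalize (filter_and _ _ HP (locally_ball t (mkposreal _ Hr))).
  apply filter_imp. intros y [HPy Hy] Hty. apply HPy, HA.
  change (Rabs (y - t) < b - t) in Hy. apply Rabs_lt_between in Hy. lra.
Qed.

Lemma is_derive_at_left (f : R -> R) (t l : R) :
  is_derive f t l -> filterlim (fun y => (f y - f t) / (y - t)) (at_left t) (locally l).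
Proof.
  intros H. apply (is_derive_within (fun y => y < t)) in H.
  eapply filterlim_filter_le_1; [|exact H]. intros P HP.
  apply (filter_imp _ _ (fun y Hy Hyt => Hy (conj Hyt (Rlt_not_eq _ _ Hyt))) HP).
Qed.

Lemma continuous_within (D : R -> Prop) (f : R -> R) (t : R) :
  continuous f t -> filterlim f (within D (locally t)) (locally (f t)).
Proof.
  intros Hf. apply (filterlim_filter_le_1 f (F := locally t)); [|exact Hf].
  intros P HP. exact (filter_imp _ _ (fun y Hy _ => Hy) HP).
Qed.

Lemma continuous_eq_left (f g : R -> R) (a t : R) : a < t ->
  continuous f t -> continuous g t -> (forall y, a < y < t -> f y = g y) -> f t = g t.
Proof.
  intros Hat Hf Hg Hfg.
  apply (filterlim_eventually_eq (F := at_left t) f g);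
    [|exact (continuous_within _ f t Hf) | exact (continuous_within _ g t Hg)].
  assert (Hr : 0 < t - a) by lra. exists (mkposreal _ Hr). intros y Hy Hyt.
  change (Rabs (y - t) < t - a) in Hy. apply Rabs_lt_between in Hy. apply Hfg. lra.
Qed.

Lemma continuous_eq_right (f g : R -> R) (t b : R) : t < b ->
  continuous f t -> continuous g t -> (forall y, t < y < b -> f y = g y) -> f t = g t.
Proof.
  intros Htb Hf Hg Hfg.
  apply (filterlim_eventually_eq (F := at_right t) f g);
    [|exact (continuous_within _ f t Hf) | exact (continuous_within _ g t Hg)].
  assert (Hr : 0 < b - t) by lra. exists (mkposreal _ Hr). intros y Hy Hty.
  change (Rabs (y - t) < b - t) in Hy. apply Rabs_lt_between in Hy. apply Hfg. lra.
Qed.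

Lemma derive_eq_of_eq_left (f g : R -> R) (a t lf lg : R) : a < t ->
  is_derive f t lf -> is_derive g t lg -> (forall y, a < y <= t -> f y = g y) -> lf = lg.
Proof.
  intros Hat Hf Hg Hfg. apply is_derive_at_left in Hf. apply is_derive_at_left in Hg.
  apply (filterlim_eventually_eq (F := at_left t)
           (fun y => (f y - f t) / (y - t)) (fun y => (g y - g t) / (y - t)) lf lg);
    [|exact Hf|exact Hg].
  assert (Hr : 0 < t - a) by lra. exists (mkposreal _ Hr). intros y Hy Hyt.
  change (Rabs (y - t) < t - a) in Hy. apply Rabs_lt_between in Hy.
  rewrite !Hfg by lra. reflexivity.
Qed.

Lemma eq_of_zero_derive_right (f : R -> R) (t b : R) :
  (forall y, t < y < b -> is_derive f y 0) -> filterlim f (at_right t) (locally (f t)) ->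
  forall y, t <= y < b -> f y = f t.
Proof.
  intros Hd Hc y Hy. destruct (Req_dec y t) as [->|Hne]; [reflexivity|].
  symmetry. apply (filterlim_eventually_eq (F := at_right t) f (fun _ => f y));
    [|exact Hc | apply filterlim_const].
  assert (Hr : 0 < y - t) by lra. exists (mkposreal _ Hr). intros z Hz Htz.
  change (Rabs (z - t) < y - t) in Hz. apply Rabs_lt_between in Hz.
  apply (derive_zero_eq f t b); lra || auto.
Qed.

Lemma interval_induction (L : R) (Q : R -> Prop) : 0 < L ->
  (forall t, 0 <= t < L -> (forall y, 0 <= y < t -> Q y) -> Q t) ->
  (forall t, 0 <= t < L -> (forall y, 0 <= y <= t -> Q y) ->
     exists d, 0 < d /\ forall y, t <= y < t + d -> Q y) ->
  forall y, 0 <= y < L -> Q y.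
Proof.
  intros HL Hclosed Hstep.
  set (S := fun t => 0 <= t <= L /\ forall y, 0 <= y < t -> Q y).
  assert (Hb : bound S) by (exists L; intros t [Ht _]; lra).
  assert (Hne : exists t, S t) by (exists 0; split; [lra | intros; lra]).
  destruct (completeness S Hb Hne) as [s [Hub Hlub]].
  assert (Hs0 : 0 <= s) by (apply Hub; split; [lra | intros; lra]).
  assert (HsL : s <= L) by (apply Hlub; intros t [Ht _]; lra).
  assert (Hbelow : forall y, 0 <= y < s -> Q y).
  { intros y Hy. apply NNPP. intros HQ. enough (s <= y) by lra.
    apply Hlub. intros t [Ht HQt]. destruct (Rle_lt_dec t y) as [|Hyt]; [assumption|].
    exfalso. apply HQ, HQt. lra. }
  destruct (Req_dec s L) as [->|HsL']; [exact Hbelow|].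
  exfalso. assert (Qs : Q s) by (apply Hclosed; [lra | exact Hbelow]).
  destruct (Hstep s ltac:(lra)) as [d [Hd Hright]].
  { intros y Hy. destruct (Req_dec y s) as [->|]; [exact Qs | apply Hbelow; lra]. }
  pose proof (Rmin_l (s + d / 2) L). pose proof (Rmin_r (s + d / 2) L). set (t := Rmin (s + d / 2) L) in *.
  assert (St : S t).
  { split; [split; [apply Rmin_glb; lra | lra]|].
    intros y Hy. destruct (Rlt_le_dec y s); [apply Hbelow | apply Hright]; lra. }
  specialize (Hub t St). unfold t, Rmin in Hub. destruct (Rle_dec (s + d / 2) L); lra.
Qed.

Lemma is_derive_pos_right (f : R -> R) (t l : R) : is_derive f t l -> 0 < l ->
  exists r, 0 < r /\ forall y, t < y < t + r -> f t < f y.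
Proof.
  rewrite is_derive_eps. intros H Hl. destruct (H l Hl) as [r [Hr H1]]. exists r. split; [exact Hr|].
  intros y Hy. specialize (H1 y ltac:(lra) ltac:(rewrite Rabs_right; lra)).
  apply Rabs_lt_between in H1.
  assert (Hq : 0 < (f y - f t) / (y - t) * (y - t)) by (apply Rmult_lt_0_compat; lra).
  replace ((f y - f t) / (y - t) * (y - t)) with (f y - f t) in Hq by (field; lra). lra.
Qed.

Lemma is_derive_first_order (f : R -> R) (x l : R) : is_derive f x l ->
  forall e, 0 < e -> exists d, 0 < d /\
    forall y, Rabs (y - x) < d -> Rabs (f y - f x - l * (y - x)) <= e * Rabs (y - x).
Proof.
  rewrite is_derive_eps. intros H e He. destruct (H e He) as [d [Hd H1]].
  exists d. split; [exact Hd|]. intros y Hy. destruct (Req_dec y x) as [->|Hne].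
  - replace (f x - f x - l * (x - x)) with 0 by ring. rewrite Rminus_eq_0, Rabs_R0. lra.
  - replace (f y - f x - l * (y - x)) with (((f y - f x) / (y - x) - l) * (y - x)) by (field; lra).
    rewrite Rabs_mult. apply Rmult_le_compat_r; [apply Rabs_pos|]. left. apply H1; assumption.
Qed.

Lemma filterlim_at_left_eps (f : R -> R) (a L : R) :
  (forall e, 0 < e -> exists d, 0 < d /\ forall y, a - d < y < a -> Rabs (f y - L) < e) ->
  filterlim f (at_left a) (locally L).
Proof.
  intros H. apply filterlim_locally. intros e. destruct (H e (cond_pos e)) as [d [Hd H1]].
  exists (mkposreal d Hd). intros y Hy Hya. apply H1.
  change (Rabs (y - a) < d) in Hy. apply Rabs_lt_between in Hy. lra.
Qed.

Lemma sqr_eq_same_sign (a b : R) : a * a = b * b -> 0 <= a * b -> a = b.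
Proof.
  intros Hsq Hab. assert (Hf : (a - b) * (a + b) = 0) by nra.
  destruct (Rmult_integral _ _ Hf); nra.
Qed.

Lemma filterlim_at_right_eps (f : R -> R) (t l : R) :
  filterlim f (at_right t) (locally l) ->
  forall e, 0 < e -> exists d, 0 < d /\ forall y, t < y < t + d -> Rabs (f y - l) < e.
Proof.
  intros Hf e He. destruct (proj1 (filterlim_locally f l) Hf (mkposreal e He)) as [d Hd].
  exists d. split; [apply cond_pos|]. intros y Hy. apply (Hd y); [|lra].
  change (Rabs (y - t) < d). rewrite Rabs_right; lra.
Qed.

Definition derive_tower (I : R -> Prop) (F : nat -> R -> R) : Prop :=
  forall n x, I x -> is_derive (F n) x (F (S n) x).

Lemma derive_tower_sub (I I' : R -> Prop) (F : nat -> R -> R) :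
  (forall x, I' x -> I x) -> derive_tower I F -> derive_tower I' F.
Proof. intros HI HF n x Hx. apply HF, HI, Hx. Qed.

Definition affine_tower (a b : R) (n : nat) (x : R) : R :=
  match n with O => a * x + b | 1%nat => a | _ => 0 end.

Lemma affine_tower_ok (I : R -> Prop) (a b : R) : derive_tower I (affine_tower a b).
Proof.
  intros [|[|n]] x _; unfold affine_tower; auto_derive; auto; ring.
Qed.

Fixpoint falling (a : R) (n : nat) : R :=
  match n with O => 1 | S n => falling a n * (a - INR n) end.

Definition Rpower_tower (a : R) (n : nat) (x : R) : R := falling a n * Rpower x (a - INR n).

Lemma Rpower_tower_ok (a : R) : derive_tower (fun x => 0 < x) (Rpower_tower a).
Proof.
  intros n x Hx. unfold Rpower_tower. cbn [falling].
  assert (H : is_derive (fun y => Rpower y (a - INR n)) x ((a - INR n) * Rpower x (a - INR n - 1)))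
    by (apply is_derive_Reals, derivable_pt_lim_power, Hx).
  apply (is_derive_scal _ _ (falling a n)) in H.
  rewrite S_INR. replace (a - (INR n + 1)) with (a - INR n - 1) by ring. rewrite Rmult_assoc. exact H.
Qed.

Lemma Rpower_tower_0 (a x : R) : Rpower_tower a O x = Rpower x a.
Proof. unfold Rpower_tower. cbn [falling INR]. rewrite Rminus_0_r. apply Rmult_1_l. Qed.

(* Expressions whose derivative [dterm e] is again an expression (lemma [dterm_ok]), so that
   they have derivatives of all orders.  [TSol u A P] stands for a function [u] with values
   in [A] solving the autonomous equation [u' = P O u]. *)
Inductive term : Type :=
| TTower (F : nat -> R -> R)
| TAdd (e1 e2 : term)
| TMul (e1 e2 : term)
| TComp (A : R -> Prop) (G : nat -> R -> R) (e : term)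
| TSol (u : R -> R) (A : R -> Prop) (P : nat -> R -> R).

Fixpoint eval (e : term) : R -> R :=
  match e with
  | TTower F => F O
  | TAdd e1 e2 => fun x => eval e1 x + eval e2 x
  | TMul e1 e2 => fun x => eval e1 x * eval e2 x
  | TComp _ G e => fun x => G O (eval e x)
  | TSol u _ _ => u
  end.

Fixpoint dterm (e : term) : term :=
  match e with
  | TTower F => TTower (fun n => F (S n))
  | TAdd e1 e2 => TAdd (dterm e1) (dterm e2)
  | TMul e1 e2 => TAdd (TMul (dterm e1) e2) (TMul e1 (dterm e2))
  | TComp A G e => TMul (TComp A (fun n => G (S n)) e) (dterm e)
  | TSol u A P => TComp A P (TSol u A P)
  end.

Fixpoint term_ok (D : R -> Prop) (e : term) : Prop :=
  match e with
  | TTower F => derive_tower D F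
  | TAdd e1 e2 | TMul e1 e2 => term_ok D e1 /\ term_ok D e2
  | TComp A G e => derive_tower A G /\ term_ok D e /\ forall x, D x -> A (eval e x)
  | TSol u A P => derive_tower A P /\ forall x, D x -> A (u x) /\ is_derive u x (P O (u x))
  end.

Lemma dterm_ok (D : R -> Prop) (e : term) : term_ok D e ->
  term_ok D (dterm e) /\ forall x, D x -> is_derive (eval e) x (eval (dterm e) x).
Proof.
  induction e as [F|e1 IH1 e2 IH2|e1 IH1 e2 IH2|A G e IH|u A P]; simpl.
  - intros HF. split; [intros n x Hx | intros x Hx]; apply HF, Hx.
  - intros [H1 H2]. destruct (IH1 H1) as [V1 D1], (IH2 H2) as [V2 D2].
    split; [tauto|]. intros x Hx. apply (is_derive_plus (eval e1) (eval e2)); auto.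
  - intros [H1 H2]. destruct (IH1 H1) as [V1 D1], (IH2 H2) as [V2 D2].
    split; [tauto|]. intros x Hx. apply (is_derive_mult (eval e1) (eval e2)); auto.
    intros; apply Rmult_comm.
  - intros [HG [He HI]]. destruct (IH He) as [V De].
    split.
    + split; [|exact V]. split; [|auto]. intros n x Hx. apply HG, Hx.
    + intros x Hx. rewrite Rmult_comm.
      exact (is_derive_comp (G O) (eval e) x _ _ (HG O _ (HI x Hx)) (De x Hx)).
  - intros [HP Hu]. split.
    + split; [exact HP|]. split; [split; assumption|]. intros x Hx. apply Hu, Hx.
    + intros x Hx. apply Hu, Hx.
Qed.

Lemma term_tower (D : R -> Prop) (e : term) :
  term_ok D e -> derive_tower D (fun n => eval (Nat.iter n dterm e)).
Proof.
  intros He n. assert (Hn : term_ok D (Nat.iter n dterm e)).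
  { induction n as [|n IH]; [exact He | apply (dterm_ok D _ IH)]. }
  intros x Hx. apply (dterm_ok D _ Hn), Hx.
Qed.

Lemma is_derive_eval (lo hi : R) (e : term) (f : R -> R) :
  term_ok (fun x => lo < x < hi) e -> (forall x, lo < x < hi -> f x = eval e x) ->
  forall x, lo < x < hi -> is_derive f x (eval (dterm e) x).
Proof.
  intros He Hf x Hx. apply (is_derive_ext_loc (eval e)); [|apply (dterm_ok _ e He), Hx].
  assert (Hr : 0 < Rmin (x - lo) (hi - x)) by (apply Rmin_pos; lra).
  exists (mkposreal _ Hr). intros y Hy. change (Rabs (y - x) < Rmin (x - lo) (hi - x)) in Hy.
  pose proof (Rmin_l (x - lo) (hi - x)). pose proof (Rmin_r (x - lo) (hi - x)).
  apply Rabs_lt_between in Hy. symmetry. apply Hf. lra.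
Qed.

Lemma smooth_on_tower (A D : R -> Prop) (F : nat -> R -> R) (f : R -> R) :
  (forall x, A x -> D x) -> derive_tower D F -> (forall x, A x -> F O x = f x) -> smooth_on A f.
Proof.
  intros HAD HF Hf. exists F. split; [exact Hf|].
  intros n x Hx. apply is_derive_within, HF, HAD, Hx.
Qed.

Lemma smooth_on_has_deriv (A : R -> Prop) (f : R -> R) (x : R) :
  smooth_on A f -> A x -> exists l, has_deriv_within A f x l.
Proof.
  intros [D [H0 H1]] Ax. exists (D 1%nat x). specialize (H1 O x Ax).
  rewrite has_deriv_within_eps in *. intros e He. destruct (H1 e He) as [d [Hd H2]].
  exists d. split; [exact Hd|]. intros y Ay Hyx Hy. rewrite <- (H0 y Ay), <- (H0 x Ax). auto.
Qed.

Lemma smooth_on_Ico_derive (l : R) (f : R -> R) (t : R) :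
  smooth_on (Ico 0 l) f -> 0 < t < l -> exists d, is_derive f t d.
Proof.
  intros Hf Ht. destruct (smooth_on_has_deriv _ f t Hf) as [d Hd]; [unfold Ico; lra|].
  exists d. apply (has_deriv_within_interior (Ico 0 l) f t d (Rmin t (l - t)));
    [apply Rmin_pos; lra | |exact Hd].
  intros y Hy. pose proof (Rmin_l t (l - t)). pose proof (Rmin_r t (l - t)).
  apply Rabs_lt_between in Hy. unfold Ico. lra.
Qed.

Lemma smooth_on_Ico_right (l : R) (f : R -> R) (t : R) :
  smooth_on (Ico 0 l) f -> 0 <= t < l -> filterlim f (at_right t) (locally (f t)).
Proof.
  intros Hf Ht. destruct (smooth_on_has_deriv _ f t Hf Ht) as [d Hd].
  assert (Hle : filter_le (at_right t) (within (Ico 0 l) (locally t)))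
    by (apply (at_right_le_within _ t l); [lra | unfold Ico; intros; lra]).
  apply (filterlim_filter_le_1 f Hle).
  exact (has_deriv_within_continuous _ f t d Hd).
Qed.

Lemma is_derive_RInt_open (lo hi : R) (f : R -> R) (a : R) :
  (forall x, lo < x < hi -> continuous f x) -> lo < a < hi ->
  forall t, lo < t < hi -> is_derive (fun t => RInt f a t) t (f t).
Proof.
  intros Hf Ha t Ht. apply (is_derive_RInt f (fun t => RInt f a t) a t); [|apply Hf, Ht].
  assert (Hr : 0 < Rmin (t - lo) (hi - t)) by (apply Rmin_pos; lra).
  exists (mkposreal _ Hr). intros y Hy. change (Rabs (y - t) < Rmin (t - lo) (hi - t)) in Hy.
  pose proof (Rmin_l (t - lo) (hi - t)). pose proof (Rmin_r (t - lo) (hi - t)).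
  apply Rabs_lt_between in Hy. apply (RInt_correct (V := R_CompleteNormedModule)).
  apply (ex_RInt_continuous (V := R_CompleteNormedModule)). intros z Hz.
  apply Hf, (segment_in lo hi a y); lra || auto.
Qed.

Lemma is_derive_pow_shift (c y : R) (n : nat) :
  is_derive (fun y => (y - c) ^ S n) y (INR (S n) * (y - c) ^ n).
Proof. auto_derive; [exact I|]. rewrite Rmult_1_l. reflexivity. Qed.

(* For [t <> c] this is [(t - c)^-(k+1) * RInt (fun w => (w - c)^k * b w) c t], i.e. the mean
   [∫_0^1 s^k b(c + s (t - c)) ds], extended by its limit at [t = c].  In this form the
   division by [(t - c)^(k+1)] costs no smoothness: see [is_derive_hadamard]. *)
Definition hadamard (c : R) (k : nat) (b : R -> R) (t : R) : R :=
  if Req_EM_T t c then b c / INR (S k)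
  else RInt (fun w => (w - c) ^ k * b w) c t / (t - c) ^ S k.

Section Hadamard.
Variables (lo hi c : R) (b b1 : R -> R).
Hypothesis Hc : lo < c < hi.
Hypothesis Hb : forall x, lo < x < hi -> is_derive b x (b1 x).
Hypothesis Hb1 : forall x, lo < x < hi -> continuous b1 x.

Let moment (k : nat) (g : R -> R) (y : R) : R := RInt (fun w => (w - c) ^ k * g w) c y.

Lemma is_derive_moment (k : nat) (g : R -> R) :
  (forall x, lo < x < hi -> continuous g x) ->
  forall y, lo < y < hi -> is_derive (moment k g) y ((y - c) ^ k * g y).
Proof.
  intros Hg. apply (is_derive_RInt_open lo hi (fun w => (w - c) ^ k * g w) c); [|exact Hc].
  intros x Hx. apply (continuous_mult (fun w => (w - c) ^ k)); [|apply Hg, Hx].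
  destruct k as [|k]; [apply continuous_const|].
  apply (is_derive_continuous _ x _ (is_derive_pow_shift c x k)).
Qed.

Lemma b_continuous x : lo < x < hi -> continuous b x.
Proof. intros Hx. apply (is_derive_continuous b x (b1 x)), Hb, Hx. Qed.

Lemma moment_parts (k : nat) (y : R) : lo < y < hi ->
  INR (S k) * moment k b y + moment (S k) b1 y = (y - c) ^ S k * b y.
Proof.
  intros Hy.
  set (D := fun y => INR (S k) * moment k b y + moment (S k) b1 y - (y - c) ^ S k * b y).
  enough (D y = D c) by (unfold D, moment in *; rewrite !RInt_point, Rminus_eq_0, pow_i in * by lia;
    change (@zero R_CompleteNormedModule) with 0 in *; lra).
  apply (derive_zero_eq D lo hi); [|exact Hy|exact Hc].
  intros z Hz. unfold D.
  assert (H1 := is_derive_scal _ _ (INR (S k)) _ (is_derive_moment k b b_continuous z Hz)).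
  assert (H2 := is_derive_moment (S k) b1 Hb1 z Hz).
  assert (H3 := is_derive_mult _ _ _ _ _ (is_derive_pow_shift c z k) (Hb z Hz) Rmult_comm).
  assert (H := is_derive_minus _ _ _ _ _ (is_derive_plus _ _ _ _ _ H1 H2) H3).
  replace 0 with (INR (S k) * ((z - c) ^ k * b z) + (z - c) ^ S k * b1 z
                  - (INR (S k) * (z - c) ^ k * b z + (z - c) ^ S k * b1 z)) by ring.
  exact H.
Qed.

Lemma hadamard_off (k : nat) (g : R -> R) (t : R) : t <> c ->
  hadamard c k g t = moment k g t / (t - c) ^ S k.
Proof. intros Ht. unfold hadamard. destruct (Req_EM_T t c); [contradiction | reflexivity]. Qed.

Lemma hadamard_at (k : nat) (g : R -> R) : hadamard c k g c = g c / INR (S k).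
Proof. unfold hadamard. destruct (Req_EM_T c c); [reflexivity | contradiction]. Qed.

Lemma is_derive_hadamard_off (k : nat) (t : R) : lo < t < hi -> t <> c ->
  is_derive (hadamard c k b) t (hadamard c (S k) b1 t).
Proof.
  intros Ht Htc. assert (Hz : t - c <> 0) by lra.
  assert (Hinv := is_derive_inv _ _ _ (is_derive_pow_shift c t k) (pow_nonzero _ (S k) Hz)).
  assert (H := is_derive_mult _ _ _ _ _ (is_derive_moment k b b_continuous t Ht) Hinv Rmult_comm).
  apply (is_derive_ext_loc (fun y => moment k b y * / (y - c) ^ S k)).
  { assert (Hr : 0 < Rabs (t - c)) by (apply Rabs_pos_lt; exact Hz).
    exists (mkposreal _ Hr). intros y Hy. change (Rabs (y - t) < Rabs (t - c)) in Hy.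
    rewrite hadamard_off; [reflexivity|]. intros ->. rewrite <- Rabs_Ropp in Hy.
    replace (- (c - t)) with (t - c) in Hy by ring. lra. }
  rewrite hadamard_off by exact Htc.
  replace (moment (S k) b1 t) with ((t - c) ^ S k * b t - INR (S k) * moment k b t)
    by (rewrite <- (moment_parts k t Ht); ring).
  revert H. generalize (INR (S k)) (moment k b t). intros r m H.
  assert (Hk : (t - c) ^ k <> 0) by (apply pow_nonzero, Hz).
  replace (((t - c) ^ S k * b t - r * m) / (t - c) ^ S (S k)) with
    ((t - c) ^ k * b t * / (t - c) ^ S k + m * (- (r * (t - c) ^ k) / ((t - c) ^ S k) ^ 2));
    [exact H | simpl; field; auto].
Qed.

Let remainder (k : nat) (y : R) : R :=
  moment k b y - b c * (y - c) ^ S k / INR (S k) - b1 c * (y - c) ^ S (S k) / INR (S (S k)).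

Lemma is_derive_remainder (k : nat) (y : R) : lo < y < hi ->
  is_derive (remainder k) y ((y - c) ^ k * (b y - b c - b1 c * (y - c))).
Proof.
  intros Hy.
  assert (Nk1 : INR (S k) <> 0) by (apply not_0_INR; lia).
  assert (Nk2 : INR (S (S k)) <> 0) by (apply not_0_INR; lia).
  assert (H1 := is_derive_scal _ _ (b c / INR (S k)) _ (is_derive_pow_shift c y k)).
  assert (H2 := is_derive_scal _ _ (b1 c / INR (S (S k))) _ (is_derive_pow_shift c y (S k))).
  assert (H : is_derive (fun y => moment k b y - b c / INR (S k) * (y - c) ^ S k
                                  - b1 c / INR (S (S k)) * (y - c) ^ S (S k)) y
                ((y - c) ^ k * b y - b c / INR (S k) * (INR (S k) * (y - c) ^ k)
                 - b1 c / INR (S (S k)) * (INR (S (S k)) * (y - c) ^ S k)))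
    by exact (is_derive_minus _ _ _ _ _
                (is_derive_minus _ _ _ _ _ (is_derive_moment k b b_continuous y Hy) H1) H2).
  apply (is_derive_eq _ _ _ _ _ H); [intros z; unfold remainder, Rdiv; ring|].
  cbn [pow]. field. split; assumption.
Qed.

Lemma remainder_at (k : nat) : remainder k c = 0.
Proof.
  unfold remainder, moment. rewrite RInt_point, Rminus_eq_0, !pow_i by lia.
  change (@zero R_CompleteNormedModule) with 0. field. split; apply not_0_INR; lia.
Qed.

(* The difference quotient at [c] is [remainder k y / (y - c)^(k+2)], and by the mean value
   theorem [remainder k y] is [(y - c)^(k+1)] times a first-order Taylor error of [b]. *)
Lemma is_derive_hadamard_at (k : nat) :
  is_derive (hadamard c k b) c (hadamard c (S k) b1 c).
Proof.
  rewrite hadamard_at. apply is_derive_eps. intros e He.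
  destruct (is_derive_first_order b c (b1 c) (Hb c Hc) (e / 2) ltac:(lra)) as [d1 [Hd1 Hb']].
  pose proof (Rmin_l d1 (Rmin (c - lo) (hi - c))). pose proof (Rmin_r d1 (Rmin (c - lo) (hi - c))).
  pose proof (Rmin_l (c - lo) (hi - c)). pose proof (Rmin_r (c - lo) (hi - c)).
  assert (Hd : 0 < Rmin d1 (Rmin (c - lo) (hi - c))) by (apply Rmin_pos; [|apply Rmin_pos]; lra).
  set (d := Rmin d1 (Rmin (c - lo) (hi - c))) in *.
  exists d. split; [exact Hd|]. intros y Hyc Hyd.
  assert (Hy : lo < y < hi) by (apply Rabs_lt_between in Hyd; lra).
  assert (Hz : y - c <> 0) by lra. assert (Hay : 0 < Rabs (y - c)) by (apply Rabs_pos_lt, Hz).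
  rewrite (hadamard_off k b y Hyc), (hadamard_at k b).
  replace ((moment k b y / (y - c) ^ S k - b c / INR (S k)) / (y - c) - b1 c / INR (S (S k)))
    with (remainder k y / (y - c) ^ S (S k))
    by (unfold remainder; cbn [pow]; field; repeat split; try apply pow_nonzero; auto; apply not_0_INR; lia).
  destruct (MVT_gen (remainder k) c y (fun y => (y - c) ^ k * (b y - b c - b1 c * (y - c))))
    as [xi [Hxi Hmvt]].
  { intros z Hz'. apply is_derive_remainder, (segment_in lo hi c y Hc Hy). lra. }
  { intros z Hz'. eapply is_derive_continuity_pt,
      is_derive_remainder, (segment_in lo hi c y Hc Hy z Hz'). }
  rewrite remainder_at, Rminus_0_r in Hmvt. rewrite Hmvt.
  assert (Hxc : Rabs (xi - c) <= Rabs (y - c)).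
  { unfold Rmin, Rmax in Hxi. destruct (Rle_dec c y); [rewrite !Rabs_right | rewrite !Rabs_left1]; lra. }
  specialize (Hb' xi ltac:(lra)).
  rewrite Rabs_div by (apply pow_nonzero, Hz). rewrite !Rabs_mult, <- !RPow_abs.
  apply (Rmult_lt_reg_r (Rabs (y - c) ^ S (S k))); [apply pow_lt, Hay|].
  unfold Rdiv. rewrite Rmult_assoc, Rinv_l, Rmult_1_r by (apply pow_nonzero; lra).
  assert (Hpow : Rabs (xi - c) ^ k <= Rabs (y - c) ^ k)
    by (apply pow_incr; split; [apply Rabs_pos | exact Hxc]).
  apply Rle_lt_trans with (Rabs (y - c) ^ k * (e / 2 * Rabs (y - c)) * Rabs (y - c)).
  - apply Rmult_le_compat_r; [apply Rabs_pos|].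
    apply Rmult_le_compat; [apply pow_le, Rabs_pos | apply Rabs_pos | exact Hpow|].
    apply (Rle_trans _ _ _ Hb'), Rmult_le_compat_l; lra.
  - cbn [pow]. assert (0 < Rabs (y - c) ^ k) by (apply pow_lt, Hay).
    assert (0 < Rabs (y - c) * (Rabs (y - c) * Rabs (y - c) ^ k))
      by (repeat apply Rmult_lt_0_compat; assumption).
    nra.
Qed.

Lemma is_derive_hadamard (k : nat) (t : R) : lo < t < hi ->
  is_derive (hadamard c k b) t (hadamard c (S k) b1 t).
Proof.
  intros Ht. destruct (Req_dec t c) as [->|Htc].
  - apply is_derive_hadamard_at.
  - apply is_derive_hadamard_off; assumption.
Qed.

End Hadamard.

Lemma hadamard_tower (lo hi c : R) (m : nat) (beta : nat -> R -> R) : lo < c < hi ->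
  derive_tower (fun x => lo < x < hi) beta ->
  derive_tower (fun x => lo < x < hi) (fun n => hadamard c (m + n) (beta n)).
Proof.
  intros Hc Hb n x Hx. replace (m + S n)%nat with (S (m + n)) by lia.
  apply (is_derive_hadamard lo hi c); auto.
  intros y Hy. apply (is_derive_continuous _ _ _ (Hb (S n) y Hy)).
Qed.

Section Inverse.
Variables (f g df : R -> R) (a b c d : R).
Hypothesis Hf : forall w, a < w < b -> is_derive f w (df w) /\ 0 < df w.
Hypothesis Hf_into : forall w, a < w < b -> c < f w < d.
Hypothesis Hg : forall y, c < y < d -> a < g y < b /\ f (g y) = y.

Lemma inverse_continuous (y r : R) : c < y < d -> 0 < r -> a < g y - r -> g y + r < b ->
  exists delta, 0 < delta /\ forall z, Rabs (z - y) < delta -> c < z < d /\ Rabs (g z - g y) < r.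
Proof.
  intros Hy Hr Hlo Hhi. destruct (Hg y Hy) as [Hw Hfw]. set (w := g y) in *.
  assert (Hwp : a < w + r < b) by lra. assert (Hwm : a < w - r < b) by lra.
  assert (Hup : y < f (w + r)) by (rewrite <- Hfw; apply (derive_pos_lt_iff f df a b Hf); lra).
  assert (Hdown : f (w - r) < y) by (rewrite <- Hfw; apply (derive_pos_lt_iff f df a b Hf); lra).
  exists (Rmin (f (w + r) - y) (y - f (w - r))). split; [apply Rmin_pos; lra|].
  intros z Hz. apply Rabs_lt_between in Hz.
  pose proof (Rmin_l (f (w + r) - y) (y - f (w - r))). pose proof (Rmin_r (f (w + r) - y) (y - f (w - r))).
  assert (Hz' : c < z < d) by (pose proof (Hf_into _ Hwp); pose proof (Hf_into _ Hwm); lra).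
  split; [exact Hz'|]. destruct (Hg z Hz') as [Hv Hfv]. apply Rabs_def1.
  - enough (g z < w + r) by lra. apply (derive_pos_lt_iff f df a b Hf); lra.
  - enough (w - r < g z) by lra. apply (derive_pos_lt_iff f df a b Hf); lra.
Qed.

Lemma is_derive_inverse (y : R) : c < y < d -> is_derive g y (/ df (g y)).
Proof.
  intros Hy. apply is_derive_eps. intros e He.
  destruct (Hg y Hy) as [Hw Hfw]. set (w := g y) in *.
  destruct (Hf w Hw) as [Hdf Hp]. set (p := df w) in *.
  pose proof (Rmin_l (p / 2) (e * p * p / 2)). pose proof (Rmin_r (p / 2) (e * p * p / 2)).
  assert (Heta : 0 < Rmin (p / 2) (e * p * p / 2))
    by (apply Rmin_pos; [lra | apply Rdiv_lt_0_compat; [repeat apply Rmult_lt_0_compat|]; lra]).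
  destruct (proj1 (is_derive_eps _ _ _) Hdf _ Heta) as [r0 [Hr0 Hquot]].
  pose proof (Rmin_l (r0 / 2) (Rmin ((w - a) / 2) ((b - w) / 2))).
  pose proof (Rmin_r (r0 / 2) (Rmin ((w - a) / 2) ((b - w) / 2))).
  pose proof (Rmin_l ((w - a) / 2) ((b - w) / 2)). pose proof (Rmin_r ((w - a) / 2) ((b - w) / 2)).
  assert (Hr : 0 < Rmin (r0 / 2) (Rmin ((w - a) / 2) ((b - w) / 2)))
    by (apply Rmin_pos; [|apply Rmin_pos]; lra).
  set (r := Rmin (r0 / 2) (Rmin ((w - a) / 2) ((b - w) / 2))) in *.
  destruct (inverse_continuous y r Hy Hr ltac:(change (a < w - r); lra) ltac:(change (w + r < b); lra))
    as [delta [Hdelta Hnear]].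
  exists delta. split; [exact Hdelta|]. intros z Hzy Hz.
  destruct (Hnear z Hz) as [Hz' Hvw]. change (Rabs (g z - w) < r) in Hvw.
  destruct (Hg z Hz') as [_ Hfv]. set (v := g z) in *.
  assert (Hne : v <> w) by (intros E; rewrite E in Hfv; lra).
  specialize (Hquot v Hne ltac:(lra)). rewrite Hfv, Hfw in Hquot.
  set (q := (z - y) / (v - w)) in *.
  assert (Hq : p / 2 < q) by (apply Rabs_lt_between in Hquot; lra).
  replace ((v - w) / (z - y)) with (/ q) by (unfold q; field; split; lra).
  replace (/ q - / p) with ((p - q) / (q * p)) by (field; lra).
  rewrite Rabs_div, (Rabs_right (q * p)), <- Rabs_Ropp by nra.
  replace (- (p - q)) with (q - p) by ring.
  apply (Rmult_lt_reg_r (q * p)); [nra|].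
  unfold Rdiv. rewrite Rmult_assoc, Rinv_l, Rmult_1_r by nra.
  assert (e * (p * p / 2) < e * (q * p)) by (apply Rmult_lt_compat_l; nra). lra.
Qed.

End Inverse.

Section Accelerating.
Variables gamma J S0 ubi u0 : R.
Let us := u_s gamma J S0.
Hypothesis Hgamma : 0 <= gamma.
Hypothesis HJ : 0 < J.
Hypothesis Hus_ubi : us < ubi.
Hypothesis Hu0 : 0 < u0.
Hypothesis Hu0_us : u0 < us.

Let pw (t : R) : R := Rpower t (gamma + 1).
Let dH (t : R) : R := J / (ubi * pw t) * (pw t - pw us) * (ubi - t).
Let H := H_fun gamma J S0 ubi.

Lemma us_pos : 0 < us.
Proof. apply exp_pos. Qed.

Lemma pw_pos (t : R) : 0 < pw t.
Proof. apply exp_pos. Qed.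

Lemma pw_lt (s t : R) : 0 < s -> s < t -> pw s < pw t.
Proof. intros. apply Rlt_Rpower_l; lra. Qed.

Lemma pw_le (s t : R) : 0 < s -> s <= t -> pw s <= pw t.
Proof. intros Hs [Hst|<-]; [left; apply pw_lt|right]; auto. Qed.

Lemma is_derive_pw (t : R) : 0 < t -> is_derive pw t ((gamma + 1) * Rpower t gamma).
Proof.
  intros Ht. apply is_derive_Reals. replace gamma with (gamma + 1 - 1) at 2 by ring.
  apply derivable_pt_lim_power, Ht.
Qed.

Lemma dH_form (t : R) : 0 < t -> dH t = J / ubi * (1 - pw us / pw t) * (ubi - t).
Proof. intros. unfold dH. pose proof (pw_pos t). field. split; lra. Qed.

Lemma pw_ratio_lt1 (t : R) : us < t -> 0 < 1 - pw us / pw t.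
Proof.
  intros Ht. pose proof us_pos. pose proof (pw_lt us t ltac:(lra) Ht). pose proof (pw_pos t).
  enough (pw us / pw t < 1) by lra. apply (Rmult_lt_reg_r (pw t)); [lra|].
  unfold Rdiv. rewrite Rmult_assoc, Rinv_l; lra.
Qed.

Lemma dH_neg_below (t : R) : 0 < t < us -> dH t < 0.
Proof.
  intros Ht. pose proof us_pos. rewrite dH_form by lra. pose proof (pw_lt t us ltac:(lra) ltac:(lra)).
  pose proof (pw_pos t). assert (1 - pw us / pw t < 0).
  { enough (1 < pw us / pw t) by lra. apply (Rmult_lt_reg_r (pw t)); [lra|].
    unfold Rdiv. rewrite Rmult_assoc, Rinv_l; lra. }
  assert (0 < J / ubi) by (apply Rdiv_lt_0_compat; lra).
  assert (J / ubi * (1 - pw us / pw t) < 0) by nra. nra.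
Qed.

Lemma dH_pos_between (t : R) : us < t < ubi -> 0 < dH t.
Proof.
  intros Ht. pose proof us_pos. rewrite dH_form by lra. pose proof (pw_ratio_lt1 t ltac:(lra)).
  assert (0 < J / ubi) by (apply Rdiv_lt_0_compat; lra).
  apply Rmult_lt_0_compat; [apply Rmult_lt_0_compat|]; lra.
Qed.

Lemma dH_neg_above (t : R) : ubi < t -> dH t < 0.
Proof.
  intros Ht. pose proof us_pos. rewrite dH_form by lra. pose proof (pw_ratio_lt1 t ltac:(lra)).
  assert (0 < J / ubi) by (apply Rdiv_lt_0_compat; lra).
  assert (0 < J / ubi * (1 - pw us / pw t)) by (apply Rmult_lt_0_compat; lra). nra.
Qed.

Lemma dH_continuous (t : R) : 0 < t -> continuous dH t.
Proof.
  intros Ht. assert (Hd : ex_derive dH t).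
  { unfold dH, pw, Rpower. auto_derive. pose proof (exp_pos ((gamma + 1) * ln t)).
    repeat split; try lra. apply Rgt_not_eq, Rmult_lt_0_compat; lra. }
  destruct Hd as [l Hl]. exact (is_derive_continuous dH t l Hl).
Qed.

Lemma is_derive_H (t : R) : 0 < t -> is_derive H t (dH t).
Proof.
  intros Ht. pose proof us_pos.
  apply (is_derive_RInt_open 0 (t + us + 1) dH us); [|lra|lra].
  intros x Hx. apply dH_continuous. lra.
Qed.

Lemma H_us : H us = 0.
Proof. unfold H, H_fun. rewrite RInt_point. reflexivity. Qed.

Lemma H_pos_below (t : R) : 0 < t < us -> 0 < H t.
Proof.
  intros Ht. rewrite <- H_us. apply (derive_neg_lt H dH); [lra | |].
  - intros x Hx. apply is_derive_H. lra.
  - intros x Hx. apply dH_neg_below. lra.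
Qed.

Lemma H_pos_between (t : R) : us < t <= ubi -> 0 < H t.
Proof.
  intros Ht. pose proof us_pos. rewrite <- H_us. apply (derive_pos_lt H dH); [lra | |].
  - intros x Hx. apply is_derive_H. lra.
  - intros x Hx. apply dH_pos_between. lra.
Qed.

Definition slope (w : R) : R := J * (1 - pw us / pw w) * ((w - ubi) / ubi).

Lemma slope_pos (w : R) : ubi < w -> 0 < slope w.
Proof.
  intros Hw. pose proof us_pos. unfold slope. pose proof (pw_ratio_lt1 w ltac:(lra)).
  assert (0 < (w - ubi) / ubi) by (apply Rdiv_lt_0_compat; lra).
  apply Rmult_lt_0_compat; [apply Rmult_lt_0_compat|]; lra.
Qed.

Lemma dH_le_slope (w t : R) : ubi < w <= t -> dH t <= - slope w.
Proof.
  intros Hwt. pose proof us_pos. pose proof (pw_pos t). pose proof (pw_pos w). pose proof (pw_pos us).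
  rewrite dH_form by lra. unfold slope. pose proof (pw_ratio_lt1 w ltac:(lra)).
  assert (Hr : 1 - pw us / pw w <= 1 - pw us / pw t).
  { enough (pw us / pw t <= pw us / pw w) by lra. unfold Rdiv. apply Rmult_le_compat_l; [lra|].
    apply Rinv_le_contravar; [lra | apply pw_le; lra]. }
  assert (Ha : (ubi - t) / ubi <= - ((w - ubi) / ubi)).
  { replace (- ((w - ubi) / ubi)) with ((ubi - w) / ubi) by (field; lra).
    unfold Rdiv. apply Rmult_le_compat_r; [left; apply Rinv_0_lt_compat|]; lra. }
  assert (0 < (w - ubi) / ubi) by (apply Rdiv_lt_0_compat; lra).
  replace (J / ubi * (1 - pw us / pw t) * (ubi - t))
    with (J * ((1 - pw us / pw t) * ((ubi - t) / ubi))) by (field; lra).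
  replace (- (J * (1 - pw us / pw w) * ((w - ubi) / ubi)))
    with (J * ((1 - pw us / pw w) * - ((w - ubi) / ubi))) by ring.
  apply Rmult_le_compat_l; [lra | nra].
Qed.

Lemma H_le_linear (w s t : R) : ubi < w <= s -> s <= t -> H t <= H s - slope w * (t - s).
Proof.
  intros Hws Hst. pose proof us_pos.
  enough (H t + slope w * t <= H s + slope w * s) by lra.
  apply (derive_nonpos_le (fun x => H x + slope w * x) (fun x => dH x + slope w)); [lra | |].
  - intros x Hx. apply (is_derive_eq _ _ _ _ _
      (is_derive_plus _ _ _ _ _ (is_derive_H x ltac:(lra))
         (is_derive_scal _ x (slope w) _ (is_derive_id x)))).
    + reflexivity.
    + change (dH x + slope w * 1 = dH x + slope w). ring.
  - intros x Hx. pose proof (dH_le_slope w x ltac:(lra)). lra.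
Qed.

Lemma H_root_exists : exists z, ubi < z /\ H z = 0.
Proof.
  pose proof us_pos. set (w := 2 * ubi). pose proof (slope_pos w ltac:(unfold w; lra)).
  set (W := w + (Rabs (H w) + 1) / slope w).
  assert (Hq : 0 < (Rabs (H w) + 1) / slope w)
    by (apply Rdiv_lt_0_compat; [pose proof (Rabs_pos (H w))|]; lra).
  assert (HW : H W < 0).
  { pose proof (H_le_linear w w W ltac:(unfold w; lra) ltac:(unfold W; lra)) as Hlin.
    pose proof (Rle_abs (H w)).
    replace (slope w * (W - w)) with (Rabs (H w) + 1) in Hlin by (unfold W; field; lra). lra. }
  pose proof (H_pos_between ubi ltac:(lra)).
  destruct (Ranalysis5.IVT_interv (fun x => - H x) ubi W) as [z [Hz Hz0]].
  - intros x Hx. apply continuity_pt_opp, (is_derive_continuity_pt H x (dH x)), is_derive_H. lra.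
  - unfold W, w in *. lra.
  - lra.
  - lra.
  - exists z. split; [|lra]. destruct (Req_dec z ubi) as [->|]; lra.
Qed.

Definition umax : R := proj1_sig (constructive_indefinite_description _ H_root_exists).

Lemma umax_spec : ubi < umax /\ H umax = 0.
Proof. exact (proj2_sig (constructive_indefinite_description _ H_root_exists)). Qed.

Lemma us_lt_umax : us < umax.
Proof. pose proof umax_spec. lra. Qed.

Lemma H_pos (t : R) : 0 < t < umax -> t <> us -> 0 < H t.
Proof.
  intros Ht Hne. destruct umax_spec as [Hu HHu].
  destruct (Rlt_le_dec t us); [apply H_pos_below; lra|].
  destruct (Rle_lt_dec t ubi); [apply H_pos_between; lra|].
  rewrite <- HHu. apply (derive_neg_lt H dH); [lra | |].
  - intros x Hx. apply is_derive_H. lra.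
  - intros x Hx. apply dH_neg_above. lra.
Qed.

Lemma H_nonneg_le_umax (t : R) : 0 < t -> 0 <= H t -> t <= umax.
Proof.
  intros Ht HHt. destruct umax_spec as [Hu HHu]. destruct (Rle_lt_dec t umax) as [|Hlt]; [assumption|].
  enough (H t < H umax) by lra. apply (derive_neg_lt H dH); [lra | |].
  - intros x Hx. apply is_derive_H. lra.
  - intros x Hx. apply dH_neg_above. lra.
Qed.

Let Iu (x : R) : Prop := 0 < x < umax.

Lemma us_Iu : Iu us.
Proof. split; [apply us_pos | apply us_lt_umax]. Qed.

Lemma u0_Iu : Iu u0.
Proof. pose proof us_lt_umax. split; lra. Qed.

Let dpw (n : nat) : R -> R := Rpower_tower (gamma + 1) (S n).

Lemma dpw_tower : derive_tower Iu dpw.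
Proof. intros n x Hx. apply (Rpower_tower_ok (gamma + 1) (S n)), Hx. Qed.

Lemma dpw_0 (t : R) : dpw O t = (gamma + 1) * Rpower t gamma.
Proof.
  unfold dpw, Rpower_tower. cbn [falling INR].
  replace (gamma + 1 - 1) with gamma by ring. ring.
Qed.

Let M_tower (n : nat) : R -> R := hadamard us n (dpw n).
Let M : R -> R := M_tower O.

Lemma M_tower_ok : derive_tower Iu M_tower.
Proof. apply (hadamard_tower 0 umax us 0 dpw us_Iu dpw_tower). Qed.

Lemma RInt_dpw (t : R) : 0 < t -> RInt (fun w => (w - us) ^ 0 * dpw O w) us t = pw t - pw us.
Proof.
  intros Ht. pose proof us_pos. apply is_RInt_unique.
  assert (Hseg : forall x, Rmin us t <= x <= Rmax us t -> 0 < x)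
    by (intros x Hx; unfold Rmin, Rmax in Hx; destruct (Rle_dec us t); lra).
  apply (is_RInt_derive (V := R_CompleteNormedModule) pw).
  - intros x Hx. cbv beta. rewrite pow_O, Rmult_1_l, dpw_0. apply is_derive_pw, Hseg. lra.
  - intros x Hx. apply (continuous_ext (dpw O)); [intros w; simpl; ring|].
    exact (is_derive_continuous _ _ _ (Rpower_tower_ok (gamma + 1) 1%nat x (Hseg x Hx))).
Qed.

Lemma M_off (t : R) : 0 < t -> t <> us -> M t = (pw t - pw us) / (t - us).
Proof. intros Ht Hne. unfold M, M_tower. rewrite hadamard_off, RInt_dpw by assumption. f_equal. ring. Qed.

Lemma M_at : M us = (gamma + 1) * Rpower us gamma.
Proof. unfold M, M_tower. rewrite hadamard_at, dpw_0. simpl. field. Qed.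

Lemma M_pos (t : R) : 0 < t -> 0 < M t.
Proof.
  intros Ht. pose proof us_pos. destruct (Req_dec t us) as [->|Hne].
  - rewrite M_at. apply Rmult_lt_0_compat; [lra | apply exp_pos].
  - rewrite M_off by assumption. destruct (Rlt_le_dec t us).
    + pose proof (pw_lt t us Ht r). apply Rdiv_neg_neg; lra.
    + pose proof (pw_lt us t ltac:(lra) ltac:(lra)). apply Rdiv_lt_0_compat; lra.
Qed.

Lemma pw_sub_eq (t : R) : 0 < t -> pw t - pw us = (t - us) * M t.
Proof.
  intros Ht. destruct (Req_dec t us) as [->|Hne]; [ring|].
  rewrite M_off by assumption. field. lra.
Qed.

Let b_term : term :=
  TMul (TMul (TTower (affine_tower (- (J / ubi)) J)) (TTower (Rpower_tower (- (gamma + 1)))))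
       (TTower M_tower).

Lemma b_term_ok : term_ok Iu b_term.
Proof.
  split; [split|]; [apply affine_tower_ok | | apply M_tower_ok].
  apply (derive_tower_sub (fun x => 0 < x)); [intros x Hx; apply Hx | apply Rpower_tower_ok].
Qed.

Lemma eval_b_term (t : R) : 0 < t -> eval b_term t = J * (ubi - t) / (ubi * pw t) * M t.
Proof.
  intros Ht. simpl. rewrite Rpower_tower_0, Rpower_Ropp. fold (pw t). pose proof (pw_pos t).
  pose proof us_pos. unfold affine_tower. fold M. field. split; lra.
Qed.

Lemma dH_factor (t : R) : 0 < t -> dH t = (t - us) ^ 1 * eval b_term t.
Proof.
  intros Ht. rewrite eval_b_term by assumption. unfold dH. rewrite pw_sub_eq by assumption.
  pose proof (pw_pos t). pose proof us_pos. field. split; lra.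
Qed.

Let K_tower (n : nat) : R -> R := hadamard us (1 + n) (eval (Nat.iter n dterm b_term)).
Let K : R -> R := K_tower O.

Lemma K_tower_ok : derive_tower Iu K_tower.
Proof. apply (hadamard_tower 0 umax us 1 _ us_Iu), term_tower, b_term_ok. Qed.

Lemma K_off (t : R) : 0 < t -> t <> us -> K t = H t / (t - us) ^ 2.
Proof.
  intros Ht Hne. unfold K, K_tower. rewrite hadamard_off by assumption. f_equal.
  unfold H, H_fun. fold us. apply RInt_ext. intros x Hx.
  assert (Hx0 : 0 < x) by (pose proof us_pos; unfold Rmin, Rmax in Hx; destruct (Rle_dec us t); lra).
  symmetry. apply (dH_factor x Hx0).
Qed.

Lemma K_at : K us = eval b_term us / 2.
Proof. unfold K, K_tower. rewrite hadamard_at. reflexivity. Qed.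

Lemma K_pos (t : R) : Iu t -> 0 < K t.
Proof.
  intros Ht. pose proof us_Iu. destruct (Req_dec t us) as [->|Hne].
  - rewrite K_at, eval_b_term by apply us_pos. pose proof (M_pos us us_pos). pose proof (pw_pos us).
    pose proof us_pos. assert (0 < J * (ubi - us) / (ubi * pw us)) by (apply Rdiv_lt_0_compat; nra).
    nra.
  - rewrite K_off by (apply Ht || assumption). apply Rdiv_lt_0_compat; [apply H_pos; assumption|].
    destruct (Rlt_le_dec t us); [|destruct r]; [nra | nra | lra].
Qed.

Definition E_of (t : R) : R := (t - us) * sqrt (2 * K t).
Definition du_of (t : R) : R := sqrt (2 * K t) * Rpower t gamma / M t.

Let sqrt2K_term : term :=
  TComp (fun y => 0 < y) (Rpower_tower (/ 2)) (TMul (TTower (affine_tower 0 2)) (TTower K_tower)).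
Let E_term : term := TMul (TTower (affine_tower 1 (- us))) sqrt2K_term.
Let du_term : term :=
  TMul (TMul sqrt2K_term (TTower (Rpower_tower gamma)))
       (TComp (fun y => 0 < y) (Rpower_tower (-1)) (TTower M_tower)).

Lemma sqrt2K_term_ok : term_ok Iu sqrt2K_term.
Proof.
  split; [apply Rpower_tower_ok|]. split; [split; [apply affine_tower_ok | apply K_tower_ok]|].
  intros x Hx. simpl. pose proof (K_pos x Hx). fold K. lra.
Qed.

Lemma E_term_ok : term_ok Iu E_term.
Proof. split; [apply affine_tower_ok | apply sqrt2K_term_ok]. Qed.

Lemma du_term_ok : term_ok Iu du_term.
Proof.
  split; [split|]; [apply sqrt2K_term_ok | |].
  - apply (derive_tower_sub (fun x => 0 < x)); [intros x Hx; apply Hx | apply Rpower_tower_ok].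
  - split; [apply Rpower_tower_ok|]. split; [apply M_tower_ok|].
    intros x Hx. apply M_pos, Hx.
Qed.

Lemma eval_sqrt2K_term (t : R) : Iu t -> eval sqrt2K_term t = sqrt (2 * K t).
Proof.
  intros Ht. simpl. rewrite Rpower_tower_0. fold K. rewrite Rmult_0_l, Rplus_0_l.
  apply Rpower_sqrt. pose proof (K_pos t Ht). lra.
Qed.

Lemma eval_E_term (t : R) : Iu t -> eval E_term t = E_of t.
Proof.
  intros Ht. unfold E_term. cbn [eval]. rewrite eval_sqrt2K_term by exact Ht.
  unfold E_of. simpl. ring.
Qed.

Lemma eval_du_term (t : R) : Iu t -> eval du_term t = du_of t.
Proof.
  intros Ht. unfold du_term. cbn [eval]. rewrite eval_sqrt2K_term by exact Ht.
  rewrite !Rpower_tower_0. fold M. pose proof (M_pos t (proj1 Ht)) as HM.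
  replace (-1) with (- (1)) by ring. rewrite Rpower_Ropp, Rpower_1 by exact HM.
  unfold du_of. field. lra.
Qed.

Let dE : R -> R := eval (dterm E_term).

Lemma is_derive_E_of (t : R) : Iu t -> is_derive E_of t (dE t).
Proof.
  apply (is_derive_eval 0 umax E_term E_of E_term_ok).
  intros x Hx. symmetry. apply eval_E_term, Hx.
Qed.

Lemma is_derive_dE (t : R) : Iu t -> is_derive dE t (eval (dterm (dterm E_term)) t).
Proof. apply (dterm_ok _ _ (proj1 (dterm_ok _ _ E_term_ok))). Qed.

Lemma is_derive_du_of (t : R) : Iu t -> is_derive du_of t (eval (dterm du_term) t).
Proof.
  apply (is_derive_eval 0 umax du_term du_of du_term_ok).
  intros x Hx. symmetry. apply eval_du_term, Hx.
Qed.

Lemma du_of_pos (t : R) : Iu t -> 0 < du_of t.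
Proof.
  intros Ht. unfold du_of. pose proof (K_pos t Ht). pose proof (M_pos t (proj1 Ht)).
  apply Rdiv_lt_0_compat; [apply Rmult_lt_0_compat; [apply sqrt_lt_R0; lra | apply exp_pos] | lra].
Qed.

Lemma pw_sub_neq (t : R) : 0 < t -> t <> us -> pw t - pw us <> 0.
Proof.
  intros Ht Hne. rewrite pw_sub_eq by exact Ht. pose proof (M_pos t Ht).
  apply Rmult_integral_contrapositive. split; lra.
Qed.

Lemma E_of_sq (t : R) : Iu t -> E_of t * E_of t = 2 * H t.
Proof.
  intros Ht. pose proof (K_pos t Ht). unfold E_of. destruct (Req_dec t us) as [->|Hne].
  - rewrite H_us. ring.
  - replace ((t - us) * sqrt (2 * K t) * ((t - us) * sqrt (2 * K t)))
      with ((t - us) ^ 2 * (sqrt (2 * K t) * sqrt (2 * K t))) by ring.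
    rewrite sqrt_sqrt, K_off by (apply Ht || lra || assumption). field. lra.
Qed.

Lemma E_of_sign (t : R) : Iu t -> t <> us -> 0 < (t - us) * E_of t.
Proof.
  intros Ht Hne. unfold E_of. pose proof (K_pos t Ht).
  assert (0 < sqrt (2 * K t)) by (apply sqrt_lt_R0; lra).
  replace ((t - us) * ((t - us) * sqrt (2 * K t))) with ((t - us) * (t - us) * sqrt (2 * K t)) by ring.
  apply Rmult_lt_0_compat; [destruct (Rlt_le_dec t us); nra | assumption].
Qed.

Lemma du_of_E_of (t : R) : Iu t -> t <> us -> du_of t = E_of t * Rpower t gamma / (pw t - pw us).
Proof.
  intros Ht Hne. rewrite pw_sub_eq by apply Ht. unfold du_of, E_of. pose proof (M_pos t (proj1 Ht)).
  field. split; lra.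
Qed.

Lemma dH_ratio (t : R) : 0 < t -> t <> us -> dH t * Rpower t gamma / (pw t - pw us) = J / t - J / ubi.
Proof.
  intros Ht Hne. pose proof (pw_sub_neq t Ht Hne). pose proof us_pos.
  assert (Hpw : pw t = Rpower t gamma * t) by (unfold pw; rewrite Rpower_plus, Rpower_1; auto).
  assert (Hp : 0 < Rpower t gamma) by apply exp_pos.
  unfold dH. rewrite Hpw. field. rewrite <- Hpw. repeat split; lra.
Qed.

Lemma E_of_mul_dE (t : R) : Iu t -> E_of t * dE t = dH t.
Proof.
  intros Ht.
  assert (Hprod : is_derive (fun x => E_of x * E_of x) t (dE t * E_of t + E_of t * dE t))
    by exact (is_derive_mult _ _ _ _ _ (is_derive_E_of t Ht) (is_derive_E_of t Ht) Rmult_comm).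
  assert (Hsq : is_derive (fun x => E_of x * E_of x) t (2 * dH t)).
  { apply (is_derive_ext_loc (fun x => 2 * H x)).
    - assert (Hr : 0 < Rmin t (umax - t)) by (destruct Ht; apply Rmin_pos; lra).
      exists (mkposreal _ Hr). intros y Hy. change (Rabs (y - t) < Rmin t (umax - t)) in Hy.
      pose proof (Rmin_l t (umax - t)). pose proof (Rmin_r t (umax - t)).
      apply Rabs_lt_between in Hy. destruct Ht. symmetry. apply E_of_sq. split; lra.
    - apply (is_derive_scal H), is_derive_H, Ht. }
  pose proof (is_derive_val_unique _ _ _ _ Hprod Hsq). lra.
Qed.

Lemma dE_mul_du_of_off (t : R) : Iu t -> t <> us -> dE t * du_of t = J / t - J / ubi.
Proof.
  intros Ht Hne. pose proof (E_of_sign t Ht Hne). pose proof (pw_sub_neq t (proj1 Ht) Hne).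
  assert (HE : E_of t <> 0) by (intros E; rewrite E in *; lra).
  rewrite <- dH_ratio, <- (E_of_mul_dE t Ht), du_of_E_of by (apply Ht || assumption).
  field. assumption.
Qed.

(* At the sonic point [us] both factors are smooth and the identity extends by continuity. *)
Lemma dE_mul_du_of (t : R) : Iu t -> dE t * du_of t = J / t - J / ubi.
Proof.
  intros Ht. destruct (Req_dec t us) as [->|Hne]; [|apply dE_mul_du_of_off; assumption].
  pose proof us_lt_umax. pose proof us_pos.
  apply (continuous_eq_right (fun x => dE x * du_of x) (fun x => J / x - J / ubi) us umax); [lra | | |].
  - apply (is_derive_continuous _ _ _
      (is_derive_mult _ _ _ _ _ (is_derive_dE us Ht) (is_derive_du_of us Ht) Rmult_comm)).
  - assert (Hd : ex_derive (fun x => J / x - J / ubi) us) by (auto_derive; lra).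
    destruct Hd as [l Hl]. exact (is_derive_continuous _ _ _ Hl).
  - intros y Hy. apply dE_mul_du_of_off; [split|]; lra.
Qed.

Definition x_of (w : R) : R := RInt (fun t => / du_of t) u0 w.

Lemma is_derive_inv_du_of (t : R) : Iu t ->
  is_derive (fun x => / du_of x) t (- eval (dterm du_term) t / du_of t ^ 2).
Proof. intros Ht. apply is_derive_inv; [apply is_derive_du_of, Ht | pose proof (du_of_pos t Ht); lra]. Qed.

Lemma is_derive_x_of (w : R) : Iu w -> is_derive x_of w (/ du_of w).
Proof.
  apply (is_derive_RInt_open 0 umax (fun t => / du_of t) u0); [|apply u0_Iu].
  intros x Hx. exact (is_derive_continuous _ _ _ (is_derive_inv_du_of x Hx)).
Qed.

Lemma x_of_u0 : x_of u0 = 0.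
Proof. unfold x_of. rewrite RInt_point. reflexivity. Qed.

Lemma x_of_lt_iff (v w : R) : Iu v -> Iu w -> (x_of v < x_of w <-> v < w).
Proof.
  apply (derive_pos_lt_iff x_of (fun t => / du_of t) 0 umax).
  intros t Ht. split; [apply is_derive_x_of, Ht | apply Rinv_0_lt_compat, du_of_pos, Ht].
Qed.

Lemma x_of_inj (v w : R) : Iu v -> Iu w -> x_of v = x_of w -> v = w.
Proof.
  intros Hv Hw Heq. destruct (Rtotal_order v w) as [Hlt|[|Hlt]]; [|assumption|];
    [apply (x_of_lt_iff v w Hv Hw) in Hlt | apply (x_of_lt_iff w v Hw Hv) in Hlt]; lra.
Qed.

Let w1 : R := (ubi + umax) / 2.

Lemma w1_between : ubi < w1 < umax.
Proof. unfold w1. pose proof umax_spec. lra. Qed.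

Lemma H_ge_linear (w : R) : w1 <= w <= umax -> slope w1 * (umax - w) <= H w.
Proof.
  intros Hw. pose proof w1_between. destruct umax_spec as [_ HHu].
  pose proof (H_le_linear w1 w umax ltac:(lra) ltac:(lra)). lra.
Qed.

Lemma E_of_sqrt_H (t : R) : Iu t -> us < t -> E_of t = sqrt (2 * H t).
Proof.
  intros Ht Hus. symmetry. apply sqrt_lem_1; [pose proof (H_pos t Ht ltac:(lra)); lra| |apply E_of_sq, Ht].
  pose proof (E_of_sign t Ht ltac:(lra)). nra.
Qed.

Let C_inv : R := (pw umax - pw us) / (sqrt (2 * slope w1) * Rpower w1 gamma).

(* [du_of] vanishes like a square root at [umax], so [/ du_of] is integrable there. *)
Lemma inv_du_of_bound (w : R) : w1 <= w < umax -> / du_of w <= C_inv / sqrt (umax - w).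
Proof.
  intros Hw. pose proof w1_between. pose proof us_pos. pose proof (slope_pos w1 ltac:(lra)).
  assert (Iw : Iu w) by (split; lra).
  rewrite du_of_E_of, E_of_sqrt_H by (assumption || lra).
  assert (HQ : 0 < pw w - pw us) by (pose proof (pw_lt us w ltac:(lra) ltac:(lra)); lra).
  assert (HQ2 : pw w - pw us <= pw umax - pw us) by (pose proof (pw_le w umax ltac:(lra) ltac:(lra)); lra).
  assert (HP : Rpower w1 gamma <= Rpower w gamma) by (apply Rle_Rpower_l; lra).
  assert (HP0 : 0 < Rpower w1 gamma) by apply exp_pos.
  assert (Hs1 : sqrt (2 * slope w1) * sqrt (umax - w) <= sqrt (2 * H w)).
  { rewrite <- sqrt_mult_alt by lra. apply sqrt_le_1_alt. pose proof (H_ge_linear w ltac:(lra)). nra. }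
  assert (0 < sqrt (2 * slope w1)) by (apply sqrt_lt_R0; lra).
  assert (0 < sqrt (umax - w)) by (apply sqrt_lt_R0; lra).
  assert (0 < sqrt (2 * slope w1) * sqrt (umax - w)) by (apply Rmult_lt_0_compat; lra).
  unfold C_inv. rewrite Rinv_div.
  apply Rle_trans with ((pw umax - pw us) / (sqrt (2 * slope w1) * sqrt (umax - w) * Rpower w1 gamma)).
  - unfold Rdiv. apply Rmult_le_compat; [lra | left; apply Rinv_0_lt_compat | lra |].
    + apply Rmult_lt_0_compat; [apply sqrt_lt_R0; pose proof (H_pos w Iw ltac:(lra)); lra | apply exp_pos].
    + apply Rinv_le_contravar; [apply Rmult_lt_0_compat; lra | apply Rmult_le_compat; lra].
  - right. field. repeat split; lra.
Qed.

Lemma x_of_bounded (w : R) : u0 <= w < umax -> x_of w <= x_of w1 + 2 * C_inv * sqrt (umax - w1).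
Proof.
  intros Hw. pose proof w1_between. pose proof u0_Iu. pose proof us_pos. pose proof (sqrt_pos (umax - w1)).
  assert (HC : 0 <= C_inv).
  { unfold C_inv. pose proof (slope_pos w1 ltac:(lra)). pose proof (pw_lt us umax ltac:(lra) ltac:(lra)).
    apply Rdiv_le_0_compat; [lra | apply Rmult_lt_0_compat; [apply sqrt_lt_R0; lra | apply exp_pos]]. }
  destruct (Rle_lt_dec w w1) as [Hle|Hlt].
  - assert (x_of w <= x_of w1).
    { destruct Hle as [Hlt | ->]; [left; apply x_of_lt_iff; unfold Iu in *; lra | lra]. }
    nra.
  - pose proof (sqrt_pos (umax - w)).
    enough (x_of w + 2 * C_inv * sqrt (umax - w) <= x_of w1 + 2 * C_inv * sqrt (umax - w1)) by nra.
    apply (derive_nonpos_le (fun x => x_of x + 2 * C_inv * sqrt (umax - x))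
                            (fun x => / du_of x - C_inv / sqrt (umax - x))); [lra | |].
    + intros y Hy. assert (0 < sqrt (umax - y)) by (apply sqrt_lt_R0; lra).
      assert (Hs : is_derive (fun x => sqrt (umax - x)) y (- / (2 * sqrt (umax - y))))
        by (auto_derive; [lra | unfold Rminus; ring]).
      apply (is_derive_eq _ _ _ _ _ (is_derive_plus _ _ _ _ _
               (is_derive_x_of y ltac:(split; lra)) (is_derive_scal _ _ (2 * C_inv) _ Hs)));
        [reflexivity|].
      change (/ du_of y + 2 * C_inv * - / (2 * sqrt (umax - y)) = / du_of y - C_inv / sqrt (umax - y)).
      assert (0 < du_of y) by (apply du_of_pos; split; lra). field. split; lra.
    + intros y Hy. pose proof (inv_du_of_bound y ltac:(lra)). lra.
Qed.

Let reached (y : R) : Prop := exists w, u0 <= w < umax /\ y = x_of w.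

Lemma reached_bounded : bound reached.
Proof. exists (x_of w1 + 2 * C_inv * sqrt (umax - w1)). intros y [w [Hw ->]]. apply x_of_bounded, Hw. Qed.

Lemma reached_inhabited : exists y, reached y.
Proof. exists (x_of u0). exists u0. pose proof u0_Iu. split; [unfold Iu in *; lra | reflexivity]. Qed.

Definition lmax : R := proj1_sig (completeness reached reached_bounded reached_inhabited).

Lemma lmax_lub : is_lub reached lmax.
Proof. exact (proj2_sig (completeness reached reached_bounded reached_inhabited)). Qed.

Lemma x_of_lt_lmax (w : R) : Iu w -> x_of w < lmax.
Proof.
  intros Hw. destruct lmax_lub as [Hub _]. pose proof u0_Iu.
  set (w' := Rmax u0 ((w + umax) / 2)).
  assert (Hw' : u0 <= w' < umax /\ w < w')
    by (unfold w', Rmax, Iu in *; destruct (Rle_dec u0 ((w + umax) / 2)); lra).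
  assert (x_of w < x_of w') by (apply x_of_lt_iff; unfold Iu in *; lra).
  assert (x_of w' <= lmax) by (apply Hub; exists w'; split; [apply Hw' | reflexivity]). lra.
Qed.

Lemma lmax_approx (e : R) : 0 < e -> exists w, u0 <= w < umax /\ lmax - e < x_of w.
Proof.
  intros He. destruct lmax_lub as [_ Hlub]. apply NNPP. intros Hn.
  enough (lmax <= lmax - e) by lra. apply Hlub. intros y [w [Hw ->]].
  destruct (Rle_lt_dec (x_of w) (lmax - e)); [assumption|]. exfalso. apply Hn. exists w. auto.
Qed.

Lemma lmax_pos : 0 < lmax.
Proof. rewrite <- x_of_u0. apply x_of_lt_lmax, u0_Iu. Qed.

Let xa : R := x_of (u0 / 2).

Lemma xa_neg : xa < 0.
Proof. pose proof u0_Iu. unfold xa. rewrite <- x_of_u0. apply x_of_lt_iff; unfold Iu in *; lra. Qed.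

Lemma x_of_onto (x : R) : xa < x < lmax -> exists w, u0 / 2 < w < umax /\ x_of w = x.
Proof.
  intros Hx. destruct (lmax_approx (lmax - x) ltac:(lra)) as [w [Hw Hxw]].
  pose proof u0_Iu. assert (Hlt : u0 / 2 < w) by (unfold Iu in *; lra).
  destruct (Ranalysis5.IVT_interv (fun v => x_of v - x) (u0 / 2) w) as [z [Hz Hz0]];
    [|exact Hlt|unfold xa in Hx; lra|lra|].
  - intros v Hv. apply continuity_pt_minus; [|apply continuity_pt_const; intros ? ?; reflexivity].
    apply (is_derive_continuity_pt _ _ _ (is_derive_x_of v ltac:(unfold Iu in *; split; lra))).
  - exists z. split; [|lra]. split; [|lra].
    destruct (Req_dec z (u0 / 2)) as [->|]; [unfold xa in Hx; lra | lra].
Qed.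

Definition usol (x : R) : R :=
  match Rlt_dec x lmax with
  | left _ => epsilon (inhabits 0) (fun w => u0 / 2 < w < umax /\ x_of w = x)
  | right _ => umax
  end.

Definition Esol (x : R) : R := E_of (usol x).

Lemma usol_spec (x : R) : xa < x < lmax -> u0 / 2 < usol x < umax /\ x_of (usol x) = x.
Proof.
  intros Hx. unfold usol. destruct (Rlt_dec x lmax) as [_|]; [|lra].
  apply epsilon_spec, x_of_onto, Hx.
Qed.

Lemma usol_Iu (x : R) : xa < x < lmax -> Iu (usol x).
Proof. intros Hx. destruct (usol_spec x Hx). split; lra. Qed.

Lemma usol_x_of (w : R) : Iu w -> u0 / 2 < w -> usol (x_of w) = w.
Proof.
  intros Hw Hw2. assert (Hx : xa < x_of w < lmax).
  { pose proof u0_Iu. split; [apply x_of_lt_iff; unfold Iu in *; lra | apply x_of_lt_lmax, Hw]. }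
  destruct (usol_spec _ Hx) as [Hu Hxu]. apply x_of_inj; [split; lra | exact Hw | exact Hxu].
Qed.

Lemma usol_lmax : usol lmax = umax.
Proof. unfold usol. destruct (Rlt_dec lmax lmax); [lra | reflexivity]. Qed.

Lemma usol_0 : usol 0 = u0.
Proof. rewrite <- x_of_u0. apply usol_x_of; [apply u0_Iu | lra]. Qed.

Lemma is_derive_usol (x : R) : xa < x < lmax -> is_derive usol x (du_of (usol x)).
Proof.
  intros Hx. pose proof u0_Iu.
  rewrite <- (Rinv_inv (du_of (usol x))).
  apply (is_derive_inverse x_of usol (fun t => / du_of t) (u0 / 2) umax xa lmax);
    [| |exact usol_spec|exact Hx].
  - intros w Hw. split; [apply is_derive_x_of | apply Rinv_0_lt_compat, du_of_pos]; unfold Iu in *; lra.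
  - intros w Hw. split; [apply x_of_lt_iff | apply x_of_lt_lmax]; unfold Iu in *; lra.
Qed.

Lemma Ico_lmax_Ix (x : R) : Ico 0 lmax x -> xa < x < lmax.
Proof. unfold Ico. pose proof xa_neg. lra. Qed.

Let usol_term : term := TSol usol Iu (fun n => eval (Nat.iter n dterm du_term)).
Let Esol_term : term := TComp Iu (fun n => eval (Nat.iter n dterm E_term)) usol_term.

Lemma usol_term_ok : term_ok (fun x => xa < x < lmax) usol_term.
Proof.
  split; [apply term_tower, du_term_ok|]. intros x Hx. split; [apply usol_Iu, Hx|].
  change (is_derive usol x (eval du_term (usol x))).
  rewrite eval_du_term by (apply usol_Iu, Hx). apply is_derive_usol, Hx.
Qed.

Lemma usol_smooth : smooth_on (Ico 0 lmax) usol.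
Proof.
  apply (smooth_on_tower _ _ _ _ Ico_lmax_Ix (term_tower _ _ usol_term_ok)). reflexivity.
Qed.

Lemma Esol_smooth : smooth_on (Ico 0 lmax) Esol.
Proof.
  assert (Hok : term_ok (fun x => xa < x < lmax) Esol_term).
  { split; [apply term_tower, E_term_ok|]. split; [apply usol_term_ok|]. intros x Hx. apply usol_Iu, Hx. }
  apply (smooth_on_tower _ _ _ _ Ico_lmax_Ix (term_tower _ _ Hok)).
  intros x Hx. apply eval_E_term, usol_Iu, Ico_lmax_Ix, Hx.
Qed.

Lemma usol_eq (x : R) : xa < x < lmax -> usol x <> us ->
  is_derive usol x (Esol x * Rpower (usol x) gamma / (Rpower (usol x) (gamma + 1) - Rpower us (gamma + 1))).
Proof.
  intros Hx Hne. unfold Esol. fold (pw (usol x)) (pw us).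
  rewrite <- du_of_E_of by (apply usol_Iu, Hx || exact Hne). apply is_derive_usol, Hx.
Qed.

Lemma Esol_eq (x : R) : xa < x < lmax -> is_derive Esol x (J / usol x - J / ubi).
Proof.
  intros Hx. rewrite <- (dE_mul_du_of _ (usol_Iu x Hx)), Rmult_comm. unfold Esol.
  apply (is_derive_comp E_of usol); [apply is_derive_E_of, usol_Iu, Hx | apply is_derive_usol, Hx].
Qed.

Lemma T_acc_E_of (p q : R) : T_acc gamma J S0 ubi p q -> Iu p -> q = E_of p.
Proof.
  intros [_ [HT HS]] Ip. fold us in HS. change (H_fun gamma J S0 ubi p) with (H p) in HT.
  apply sqr_eq_same_sign; [rewrite E_of_sq by exact Ip; simpl in HT; lra|].
  destruct (Req_dec p us) as [->|Hne]; [unfold E_of; nra|].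
  pose proof (E_of_sign p Ip Hne).
  assert (0 <= ((p - us) * q) * ((p - us) * E_of p)) by (apply Rmult_le_pos; lra).
  assert (0 < (p - us) * (p - us)) by (destruct (Rlt_le_dec p us); nra). nra.
Qed.

Lemma usol_solves (E0 : R) : T_acc gamma J S0 ubi u0 E0 -> is_solution gamma J S0 ubi u0 E0 lmax usol Esol.
Proof.
  intros HT. split; [exact usol_smooth|]. split; [exact Esol_smooth|].
  split; [intros x Hx; apply usol_Iu, Ico_lmax_Ix; unfold Ico; lra|].
  split; [exact usol_0|].
  split; [unfold Esol; rewrite usol_0; symmetry; apply T_acc_E_of; [exact HT | apply u0_Iu]|].
  split; intros x Hx; [apply usol_eq | apply Esol_eq]; pose proof xa_neg; lra.
Qed.

Lemma usol_near_lmax (r : R) : 0 < r ->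
  exists d, 0 < d /\ forall y, lmax - d < y < lmax -> xa < y < lmax /\ umax - r < usol y < umax.
Proof.
  intros Hr. pose proof u0_Iu. set (w := Rmax u0 (umax - r / 2)).
  assert (Iw : Iu w /\ umax - r / 2 <= w)
    by (unfold w, Rmax, Iu in *; destruct (Rle_dec u0 (umax - r / 2)); lra).
  pose proof (x_of_lt_lmax w (proj1 Iw)).
  assert (Hw0 : x_of u0 <= x_of w)
    by (destruct (Req_dec u0 w) as [E|]; [rewrite E; lra | left; apply x_of_lt_iff; unfold Iu, w, Rmax in *;
        destruct (Rle_dec u0 (umax - r / 2)); lra]).
  rewrite x_of_u0 in Hw0. pose proof xa_neg.
  exists (lmax - x_of w). split; [lra|]. intros y Hy. assert (Hxy : xa < y < lmax) by lra.
  split; [exact Hxy|]. destruct (usol_spec y Hxy) as [Hu Hxu]. split; [|lra].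
  enough (w < usol y) by lra. apply (x_of_lt_iff w (usol y) (proj1 Iw) (usol_Iu y Hxy)). lra.
Qed.

Lemma E_of_umax : E_of umax = 0.
Proof.
  unfold E_of. pose proof us_lt_umax. pose proof us_pos.
  rewrite K_off by lra. destruct umax_spec as [_ ->]. unfold Rdiv. rewrite Rmult_0_l, Rmult_0_r, sqrt_0. ring.
Qed.

Lemma sqrt_H_small (e : R) : 0 < e ->
  exists r, 0 < r /\ forall w, umax - r < w < umax -> us < w /\ sqrt (2 * H w) < e.
Proof.
  intros He. destruct umax_spec as [Hu HHu]. pose proof us_lt_umax. pose proof us_pos.
  assert (Hc := is_derive_continuity_pt H umax (dH umax) (is_derive_H umax ltac:(lra))).
  destruct (Hc (e * e / 2) ltac:(nra)) as [r0 [Hr0 Hclose]].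
  exists (Rmin r0 (umax - us)). split; [apply Rmin_pos; lra|]. intros w Hw.
  pose proof (Rmin_l r0 (umax - us)). pose proof (Rmin_r r0 (umax - us)). split; [lra|].
  assert (HHw : 0 < H w) by (apply H_pos; [split|]; lra).
  specialize (Hclose w). simpl in Hclose. unfold R_dist in Hclose.
  rewrite HHu, Rminus_0_r, (Rabs_right (H w)) in Hclose by lra.
  rewrite <- (sqrt_square e) by lra. apply sqrt_lt_1_alt. split; [lra|].
  enough (H w < e * e / 2) by lra.
  apply Hclose. split; [unfold D_x, no_cond; split; [trivial | lra] | rewrite Rabs_left; lra].
Qed.

Lemma usol_lim : filterlim usol (at_left lmax) (locally (usol lmax)).
Proof.
  rewrite usol_lmax. apply filterlim_at_left_eps. intros e He.
  destruct (usol_near_lmax e He) as [d [Hd Hnear]]. exists d. split; [exact Hd|].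
  intros y Hy. destruct (Hnear y Hy) as [_ Hu]. rewrite Rabs_left; lra.
Qed.

Lemma Esol_lim : filterlim Esol (at_left lmax) (locally (Esol lmax)).
Proof.
  unfold Esol at 2. rewrite usol_lmax, E_of_umax. apply filterlim_at_left_eps. intros e He.
  destruct (sqrt_H_small e He) as [r [Hr Hsmall]]. destruct (usol_near_lmax r Hr) as [d [Hd Hnear]].
  exists d. split; [exact Hd|]. intros y Hy. destruct (Hnear y Hy) as [Hxy Hu].
  destruct (Hsmall _ Hu) as [Hus Hs]. unfold Esol.
  rewrite E_of_sqrt_H by (apply usol_Iu || idtac; assumption).
  rewrite Rminus_0_r, Rabs_right by apply Rle_ge, sqrt_pos. exact Hs.
Qed.

Lemma du_of_usol_lim : filterlim (fun x => du_of (usol x)) (at_left lmax) (locally 0).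
Proof.
  apply filterlim_at_left_eps. intros e He. pose proof w1_between. pose proof us_pos.
  set (Q := pw w1 - pw us).
  assert (HQ : 0 < Q) by (unfold Q; pose proof (pw_lt us w1 ltac:(lra) ltac:(lra)); lra).
  set (P := Rpower umax gamma). assert (HP : 0 < P) by apply exp_pos.
  destruct (sqrt_H_small (e * Q / P) ltac:(apply Rdiv_lt_0_compat; nra)) as [r [Hr Hsmall]].
  destruct (usol_near_lmax (Rmin r (umax - w1)) ltac:(apply Rmin_pos; lra)) as [d [Hd Hnear]].
  exists d. split; [exact Hd|]. intros y Hy. destruct (Hnear y Hy) as [Hxy Hu].
  pose proof (Rmin_l r (umax - w1)). pose proof (Rmin_r r (umax - w1)).
  set (w := usol y) in *. assert (Iw : Iu w) by apply (usol_Iu y Hxy).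
  destruct (Hsmall w ltac:(lra)) as [Hus Hs].
  rewrite Rminus_0_r, du_of_E_of, E_of_sqrt_H by (assumption || lra).
  assert (HQw : Q <= pw w - pw us) by (unfold Q; pose proof (pw_le w1 w ltac:(lra) ltac:(lra)); lra).
  assert (HPw : Rpower w gamma <= P) by (apply Rle_Rpower_l; lra).
  assert (0 <= sqrt (2 * H w)) by apply sqrt_pos. assert (0 < Rpower w gamma) by apply exp_pos.
  rewrite Rabs_right by (apply Rle_ge, Rdiv_le_0_compat; [apply Rmult_le_pos|]; lra).
  apply Rle_lt_trans with (sqrt (2 * H w) * P / Q).
  - unfold Rdiv. apply Rmult_le_compat; [apply Rmult_le_pos; lra | left; apply Rinv_0_lt_compat; lra | |].
    + apply Rmult_le_compat_l; lra.
    + apply Rinv_le_contravar; lra.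
  - apply (Rmult_lt_reg_r (Q / P)); [apply Rdiv_lt_0_compat; assumption|].
    replace (sqrt (2 * H w) * P / Q * (Q / P)) with (sqrt (2 * H w)) by (field; lra).
    replace (e * (Q / P)) with (e * Q / P) by (field; lra). exact Hs.
Qed.

Lemma usol_increasing (x : R) : 0 <= x < lmax ->
  has_deriv_within (Ico 0 lmax) usol x (du_of (usol x)) /\ 0 < du_of (usol x).
Proof.
  intros Hx. assert (Hxy : xa < x < lmax) by (pose proof xa_neg; lra).
  split; [apply is_derive_within, is_derive_usol, Hxy | apply du_of_pos, usol_Iu, Hxy].
Qed.

Lemma usol_ge_u0 (x : R) : 0 <= x <= lmax -> u0 <= usol x.
Proof.
  intros Hx. pose proof u0_Iu. destruct (Req_dec x lmax) as [->|Hne].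
  - rewrite usol_lmax. unfold Iu in *. lra.
  - assert (Hxy : xa < x < lmax) by (pose proof xa_neg; lra).
    destruct (usol_spec x Hxy) as [_ Hxu]. destruct (Rlt_le_dec (usol x) u0) as [Hlt|]; [|assumption].
    apply (x_of_lt_iff _ _ (usol_Iu x Hxy) u0_Iu) in Hlt. rewrite x_of_u0 in Hlt. lra.
Qed.

Lemma usol_traces_T_acc (p q : R) : T_acc gamma J S0 ubi p q ->
  (exists x, 0 <= x <= lmax /\ p = usol x /\ q = Esol x) <-> u0 <= p.
Proof.
  intros HT. pose proof HT as [Hp [HH _]]. change (H_fun gamma J S0 ubi p) with (H p) in HH.
  split; [intros [x [Hx [-> _]]]; apply usol_ge_u0, Hx|]. intros Hup.
  assert (Hpm : p <= umax) by (apply H_nonneg_le_umax; [exact Hp | simpl in HH; nra]).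
  destruct (Req_dec p umax) as [->|Hne].
  - exists lmax. split; [pose proof lmax_pos; lra|]. rewrite usol_lmax. split; [reflexivity|].
    unfold Esol. rewrite usol_lmax, E_of_umax. destruct umax_spec as [_ Hu]. rewrite Hu in HH.
    simpl in HH. nra.
  - assert (Ip : Iu p) by (split; lra). pose proof u0_Iu.
    assert (Hx0 : 0 <= x_of p) by (rewrite <- x_of_u0; destruct (Req_dec u0 p) as [E|];
      [rewrite E; lra | left; apply x_of_lt_iff; [|exact Ip|]; unfold Iu in *; lra]).
    pose proof (x_of_lt_lmax p Ip).
    exists (x_of p). split; [lra|]. unfold Esol.
    rewrite usol_x_of by (exact Ip || (unfold Iu in *; lra)).
    split; [reflexivity | apply T_acc_E_of; assumption].
Qed.

Definition ls : R := x_of us.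

Lemma ls_between : 0 < ls < lmax.
Proof.
  split; [rewrite <- x_of_u0; apply x_of_lt_iff; [apply u0_Iu | apply us_Iu | exact Hu0_us]|].
  apply x_of_lt_lmax, us_Iu.
Qed.

Lemma usol_lt_us_iff (x : R) : 0 <= x < lmax -> (usol x < us <-> x < ls).
Proof.
  intros Hx. assert (Hxy : xa < x < lmax) by (pose proof xa_neg; lra).
  destruct (usol_spec x Hxy) as [_ Hxu]. unfold ls. rewrite <- Hxu at 2.
  symmetry. apply x_of_lt_iff; [apply usol_Iu, Hxy | apply us_Iu].
Qed.

Lemma us_lt_usol_iff (x : R) : 0 <= x < lmax -> (us < usol x <-> ls < x).
Proof.
  intros Hx. assert (Hxy : xa < x < lmax) by (pose proof xa_neg; lra).
  destruct (usol_spec x Hxy) as [_ Hxu]. unfold ls. rewrite <- Hxu at 2.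
  symmetry. apply x_of_lt_iff; [apply us_Iu | apply usol_Iu, Hxy].
Qed.

Lemma usol_ls : usol ls = us.
Proof. apply usol_x_of; [apply us_Iu | pose proof us_pos; lra]. Qed.

Lemma usol_eq_us (x : R) : 0 <= x < lmax -> usol x = us -> x = ls.
Proof.
  intros Hx Heq. assert (Hxy : xa < x < lmax) by (pose proof xa_neg; lra).
  destruct (usol_spec x Hxy) as [_ Hxu]. rewrite Heq in Hxu. exact (eq_sym Hxu).
Qed.

Section Uniqueness.
Variables (E0 : R) (v F : R -> R).
Hypothesis HT : T_acc gamma J S0 ubi u0 E0.
Hypothesis Hsol : is_solution gamma J S0 ubi u0 E0 lmax v F.

Let agree (y : R) : Prop := v y = usol y /\ F y = Esol y.

Lemma sol_deriv_v (x : R) : 0 < x < lmax -> v x <> us ->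
  is_derive v x (F x * Rpower (v x) gamma / (pw (v x) - pw us)).
Proof. destruct Hsol as [_ [_ [_ [_ [_ [Hv _]]]]]]. exact (Hv x). Qed.

Lemma sol_deriv_F (x : R) : 0 < x < lmax -> is_derive F x (J / v x - J / ubi).
Proof. destruct Hsol as [_ [_ [_ [_ [_ [_ HF]]]]]]. exact (HF x). Qed.

Lemma sol_right (t : R) : 0 <= t < lmax ->
  filterlim v (at_right t) (locally (v t)) /\ filterlim F (at_right t) (locally (F t)).
Proof.
  destruct Hsol as [Hv [HF _]]. intros Ht.
  split; [apply (smooth_on_Ico_right lmax v t Hv Ht) | apply (smooth_on_Ico_right lmax F t HF Ht)].
Qed.

Lemma energy_conserved (t d : R) : 0 <= t -> 0 < d -> t + d <= lmax -> Iu (v t) ->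
  (forall y, t < y < t + d -> Iu (v y) /\ v y <> us) -> F t * F t = 2 * H (v t) ->
  forall y, t <= y < t + d -> F y * F y = 2 * H (v y).
Proof.
  intros Ht Hd Htd Hvt Hreg Ht0.
  set (Phi := fun y => F y * F y + -2 * H (v y)).
  enough (Hc : forall y, t <= y < t + d -> Phi y = Phi t)
    by (intros y Hy; specialize (Hc y Hy); unfold Phi in *; lra).
  apply eq_of_zero_derive_right.
  - intros y Hy. destruct (Hreg y Hy) as [Hvy Hne].
    assert (Hd1 := sol_deriv_F y ltac:(lra)). assert (Hd2 := sol_deriv_v y ltac:(lra) Hne).
    assert (HdH := is_derive_comp H v y _ _ (is_derive_H (v y) (proj1 Hvy)) Hd2).
    apply (is_derive_eq _ _ _ _ _ (is_derive_plus _ _ _ _ _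
             (is_derive_mult _ _ _ _ _ Hd1 Hd1 Rmult_comm) (is_derive_scal _ _ (-2) _ HdH)));
      [reflexivity|].
    change ((J / v y - J / ubi) * F y + F y * (J / v y - J / ubi)
            + -2 * (F y * Rpower (v y) gamma / (pw (v y) - pw us) * dH (v y)) = 0).
    rewrite <- (dH_ratio (v y) (proj1 Hvy) Hne). field. apply pw_sub_neq; [apply Hvy | exact Hne].
  - destruct (sol_right t ltac:(lra)) as [Hv HF].
    apply filterlim_Rplus; [apply filterlim_Rmult; assumption|].
    apply filterlim_Rmult; [apply filterlim_const|].
    apply (filterlim_comp _ _ _ v H (at_right t) (locally (v t)) (locally (H (v t))) Hv).
    apply continuity_pt_filterlim, (is_derive_continuity_pt _ _ _ (is_derive_H (v t) (proj1 Hvt))).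
Qed.

Lemma position_conserved (t d : R) : 0 <= t -> 0 < d -> t + d <= lmax -> Iu (v t) ->
  (forall y, t < y < t + d -> Iu (v y) /\ v y <> us /\ F y = E_of (v y)) -> x_of (v t) = t ->
  forall y, t <= y < t + d -> x_of (v y) = y.
Proof.
  intros Ht Hd Htd Hvt Hreg Ht0.
  set (Psi := fun y => x_of (v y) + -1 * y).
  enough (Hc : forall y, t <= y < t + d -> Psi y = Psi t)
    by (intros y Hy; specialize (Hc y Hy); unfold Psi in *; lra).
  apply eq_of_zero_derive_right.
  - intros y Hy. destruct (Hreg y Hy) as [Hvy [Hne HFy]].
    assert (Hd2 := sol_deriv_v y ltac:(lra) Hne). rewrite HFy, <- du_of_E_of in Hd2 by assumption.
    assert (Hx := is_derive_comp x_of v y _ _ (is_derive_x_of (v y) Hvy) Hd2).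
    apply (is_derive_eq _ _ _ _ _ (is_derive_plus _ _ _ _ _ Hx (is_derive_scal _ _ (-1) _ (is_derive_id y))));
      [reflexivity|].
    change (du_of (v y) * / du_of (v y) + -1 * 1 = 0).
    pose proof (du_of_pos (v y) Hvy). field. lra.
  - destruct (sol_right t ltac:(lra)) as [Hv _].
    apply filterlim_Rplus; [|apply filterlim_Rmult; [apply filterlim_const|]].
    + apply (filterlim_comp _ _ _ v x_of (at_right t) (locally (v t)) (locally (x_of (v t))) Hv).
      apply continuity_pt_filterlim, (is_derive_continuity_pt _ _ _ (is_derive_x_of (v t) Hvt)).
    + intros P HP. destruct HP as [e He]. exists e. intros y Hy _. apply He, Hy.
Qed.

Lemma agree_right (t d : R) : 0 <= t -> 0 < d -> t + d <= lmax -> agree t ->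
  (forall y, t < y < t + d -> Iu (v y) /\ 0 < (v y - us) * F y) ->
  forall y, t <= y < t + d -> agree y.
Proof.
  intros Ht Hd Htd [Hvt HFt] Hreg.
  assert (Hxt : xa < t < lmax) by (pose proof xa_neg; lra).
  assert (Ivt : Iu (v t)) by (rewrite Hvt; apply usol_Iu, Hxt).
  assert (Hne : forall y, t < y < t + d -> v y <> us)
    by (intros y Hy E; pose proof (Hreg y Hy) as [_ Hs]; rewrite E in Hs; lra).
  assert (HE : forall y, t < y < t + d -> F y = E_of (v y)).
  { intros y Hy. destruct (Hreg y Hy) as [Ivy Hs]. apply sqr_eq_same_sign.
    - rewrite E_of_sq by exact Ivy. apply (energy_conserved t d); try lra; auto.
      + intros z Hz. split; [apply Hreg | apply Hne]; exact Hz.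
      + rewrite HFt, Hvt. apply E_of_sq, usol_Iu, Hxt.
    - pose proof (E_of_sign (v y) Ivy (Hne y Hy)).
      assert (0 <= ((v y - us) * F y) * ((v y - us) * E_of (v y))) by (apply Rmult_le_pos; lra).
      assert (0 < (v y - us) * (v y - us)) by (pose proof (Hne y Hy); destruct (Rlt_le_dec (v y) us); nra).
      nra. }
  intros y Hy. destruct (Req_dec y t) as [->|Hyt]; [split; assumption|].
  assert (Hy' : t < y < t + d) by lra. assert (Hxy : xa < y < lmax) by (pose proof xa_neg; lra).
  assert (Hxv : x_of (v y) = y).
  { apply (position_conserved t d); try lra; auto.
    - intros z Hz. split; [apply Hreg, Hz|]. split; [apply Hne, Hz | apply HE, Hz].
    - rewrite Hvt. apply usol_spec, Hxt. }
  assert (Hvy : v y = usol y).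
  { destruct (usol_spec y Hxy) as [_ Hxu]. apply x_of_inj; [apply Hreg, Hy' | apply usol_Iu, Hxy | lra]. }
  split; [exact Hvy|]. rewrite HE by exact Hy'. unfold Esol. rewrite Hvy. reflexivity.
Qed.

Lemma agree_closed (t : R) : 0 <= t < lmax -> (forall y, 0 <= y < t -> agree y) -> agree t.
Proof.
  destruct Hsol as [Sv [SF [_ [V0 [F0 _]]]]]. intros Ht Hleft.
  destruct (Req_dec t 0) as [->|Ht0].
  - split; [rewrite V0, usol_0; reflexivity|].
    rewrite F0. unfold Esol. rewrite usol_0. apply T_acc_E_of; [exact HT | apply u0_Iu].
  - assert (Hxt : xa < t < lmax) by (pose proof xa_neg; lra).
    destruct (smooth_on_Ico_derive lmax v t Sv ltac:(lra)) as [lv Hlv].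
    destruct (smooth_on_Ico_derive lmax F t SF ltac:(lra)) as [lF HlF].
    split; apply (continuous_eq_left _ _ 0 t); try lra; try (intros y Hy; apply Hleft; lra).
    + exact (is_derive_continuous _ _ _ Hlv).
    + exact (is_derive_continuous _ _ _ (is_derive_usol t Hxt)).
    + exact (is_derive_continuous _ _ _ HlF).
    + exact (is_derive_continuous _ _ _ (Esol_eq t Hxt)).
Qed.

(* At the sonic point the equation for [v] is singular; there [v] inherits [usol' > 0] from the
   left and [F' > 0] from its own equation, so the solution leaves [us] into the regular region. *)
Lemma agree_step_sonic (t : R) : 0 <= t < lmax -> (forall y, 0 <= y <= t -> agree y) ->
  usol t = us -> exists d, 0 < d /\ forall y, t <= y < t + d -> agree y.
Proof.
  destruct Hsol as [Sv _]. intros Ht Hleft Hus.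
  assert (Ht0 : 0 < t) by (destruct (Req_dec t 0) as [E|]; [rewrite E, usol_0 in Hus; lra | lra]).
  assert (Hxt : xa < t < lmax) by (pose proof xa_neg; lra).
  destruct (Hleft t ltac:(lra)) as [Hvt HFt].
  destruct (smooth_on_Ico_derive lmax v t Sv ltac:(lra)) as [lv Hlv].
  assert (Hlv' : lv = du_of us).
  { rewrite <- Hus. apply (derive_eq_of_eq_left v usol 0 t); [lra | exact Hlv | apply is_derive_usol, Hxt|].
    intros y Hy. apply Hleft. lra. }
  pose proof (du_of_pos us us_Iu). pose proof us_lt_umax. pose proof us_pos.
  destruct (is_derive_pos_right v t lv Hlv ltac:(lra)) as [r1 [Hr1 Hv_up]].
  assert (HF' : 0 < J / v t - J / ubi).
  { rewrite Hvt, Hus. enough (J / ubi < J / us) by lra.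
    apply Rmult_lt_compat_l; [lra | apply Rinv_lt_contravar; nra]. }
  destruct (is_derive_pos_right F t _ (sol_deriv_F t ltac:(lra)) HF') as [r2 [Hr2 HF_up]].
  assert (HF0 : F t = 0) by (rewrite HFt; unfold Esol, E_of; rewrite Hus; ring).
  destruct (filterlim_at_right_eps v t (v t) (proj1 (sol_right t ltac:(lra))) (umax - us) ltac:(lra))
    as [r3 [Hr3 Hv_near]].
  set (d := Rmin (Rmin r1 r2) (Rmin r3 (lmax - t))).
  assert (Hd : 0 < d) by (unfold d; repeat apply Rmin_pos; lra).
  assert (Hdr : d <= r1 /\ d <= r2 /\ d <= r3 /\ d <= lmax - t).
  { unfold d. pose proof (Rmin_l (Rmin r1 r2) (Rmin r3 (lmax - t))).
    pose proof (Rmin_r (Rmin r1 r2) (Rmin r3 (lmax - t))). pose proof (Rmin_l r1 r2).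
    pose proof (Rmin_r r1 r2). pose proof (Rmin_l r3 (lmax - t)). pose proof (Rmin_r r3 (lmax - t)). lra. }
  exists d. split; [exact Hd|]. apply agree_right; try lra; [apply Hleft; lra|].
  intros y Hy. specialize (Hv_up y ltac:(lra)). specialize (HF_up y ltac:(lra)).
  specialize (Hv_near y ltac:(lra)). rewrite Hvt, Hus in Hv_up, Hv_near. rewrite HF0 in HF_up.
  apply Rabs_lt_between in Hv_near. split; [split; lra | apply Rmult_lt_0_compat; lra].
Qed.

Lemma agree_step_regular (t : R) : 0 <= t < lmax -> agree t -> usol t <> us ->
  exists d, 0 < d /\ forall y, t <= y < t + d -> agree y.
Proof.
  intros Ht Hag Hne. destruct Hag as [Hvt HFt].
  assert (Hxt : xa < t < lmax) by (pose proof xa_neg; lra).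
  assert (Iw : Iu (usol t)) by (apply usol_Iu, Hxt). set (w := usol t) in *.
  pose proof (E_of_sign w Iw Hne) as Hsign.
  destruct (sol_right t Ht) as [Hv HF].
  assert (Hprod : filterlim (fun y => (v y + -1 * us) * F y) (at_right t) (locally ((v t + -1 * us) * F t)))
    by (apply filterlim_Rmult; [apply filterlim_Rplus; [exact Hv | apply filterlim_const] | exact HF]).
  rewrite Hvt, HFt in Hprod. unfold Esol in Hprod. fold w in Hprod.
  destruct (filterlim_at_right_eps _ t _ Hprod ((w - us) * E_of w) Hsign) as [r1 [Hr1 Hnear1]].
  assert (Heta : 0 < Rmin w (umax - w)) by (destruct Iw; apply Rmin_pos; lra).
  destruct (filterlim_at_right_eps v t (v t) Hv _ Heta) as [r2 [Hr2 Hnear2]].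
  set (d := Rmin (Rmin r1 r2) (lmax - t)).
  assert (Hd : 0 < d) by (unfold d; repeat apply Rmin_pos; lra).
  assert (Hdr : d <= r1 /\ d <= r2 /\ d <= lmax - t).
  { unfold d. pose proof (Rmin_l (Rmin r1 r2) (lmax - t)). pose proof (Rmin_r (Rmin r1 r2) (lmax - t)).
    pose proof (Rmin_l r1 r2). pose proof (Rmin_r r1 r2). lra. }
  exists d. split; [exact Hd|]. apply agree_right; try lra; [split; assumption|].
  intros y Hy. specialize (Hnear1 y ltac:(lra)). specialize (Hnear2 y ltac:(lra)).
  rewrite Hvt in Hnear2. fold w in Hnear2. apply Rabs_lt_between in Hnear1. apply Rabs_lt_between in Hnear2.
  pose proof (Rmin_l w (umax - w)). pose proof (Rmin_r w (umax - w)). destruct Iw.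
  split; [split|]; lra.
Qed.

Lemma sol_unique (x : R) : 0 <= x < lmax -> v x = usol x /\ F x = Esol x.
Proof.
  apply (interval_induction lmax agree lmax_pos); [exact agree_closed|].
  intros t Ht Hleft. destruct (Req_dec (usol t) us) as [Hus|Hne].
  - apply agree_step_sonic; assumption.
  - apply agree_step_regular; [exact Ht | apply Hleft; lra | exact Hne].
Qed.

End Uniqueness.

End Accelerating.

Theorem lemma1p1 :
  forall gamma J S0 ubi u0 : R,
    1 < gamma -> 0 < J -> 0 < S0 -> 0 < ubi ->
    ubi / u_s gamma J S0 > 1 ->
    u0 < u_s gamma J S0 ->
    exists lmax ls : R, 0 < ls < lmax /\
    forall E0 : R, T_acc gamma J S0 ubi u0 E0 ->
    exists u E : R -> R,
      (* existence *)
      is_solution gamma J S0 ubi u0 E0 lmax u E /\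
      (* uniqueness *)
      (forall v F : R -> R, is_solution gamma J S0 ubi u0 E0 lmax v F ->
         forall x, 0 <= x < lmax -> v x = u x /\ F x = E x) /\
      (* the solution extends continuously to x1 = lmax *)
      filterlim u (at_left lmax) (locally (u lmax)) /\
      filterlim E (at_left lmax) (locally (E lmax)) /\
      (* (i) and (ii) *)
      (exists du : R -> R,
         (forall x, 0 <= x < lmax ->
            has_deriv_within (Ico 0 lmax) u x (du x) /\ 0 < du x) /\
         filterlim du (at_left lmax) (locally 0)) /\
      (* (iii) *)
      (forall p q : R, T_acc gamma J S0 ubi p q ->
         ((exists x, 0 <= x <= lmax /\ p = u x /\ q = E x) <-> u0 <= p)) /\
      (* (iv) *)
      ((forall x, 0 <= x < ls -> u x < u_s gamma J S0) /\
       u ls = u_s gamma J S0 /\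
       (forall x, ls < x < lmax -> u_s gamma J S0 < u x)) /\
      (forall ls' : R, 0 < ls' < lmax ->
         (forall x, 0 <= x < ls' -> u x < u_s gamma J S0) ->
         u ls' = u_s gamma J S0 ->
         (forall x, ls' < x < lmax -> u_s gamma J S0 < u x) ->
         ls' = ls).
Proof.
  intros gamma J S0 ubi u0 Hgamma HJ _ _ Hzeta Hu0_us.
  (* [T_acc] forces [u0 > 0], so for [u0 <= 0] the statement is vacuous. *)
  destruct (Rle_lt_dec u0 0) as [Hu0|Hu0]; [exists 2, 1; split; [lra | intros E0 [Hc _]; lra]|].
  assert (Hus : u_s gamma J S0 < ubi).
  { apply Rgt_lt in Hzeta. apply (Rmult_lt_compat_r (u_s gamma J S0)) in Hzeta; [|apply exp_pos].
    unfold Rdiv in Hzeta. rewrite Rmult_assoc, Rinv_l, Rmult_1_r, Rmult_1_l in Hzeta;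
      [lra | apply Rgt_not_eq, exp_pos]. }
  assert (Hg : 0 <= gamma) by lra.
  pose proof (ls_between gamma J S0 ubi u0 Hg HJ Hus Hu0 Hu0_us) as Hls.
  exists (lmax gamma J S0 ubi u0 Hg HJ Hus Hu0 Hu0_us), (ls gamma J S0 ubi u0).
  split; [exact Hls|]. intros E0 HT.
  exists (usol gamma J S0 ubi u0 Hg HJ Hus Hu0 Hu0_us), (Esol gamma J S0 ubi u0 Hg HJ Hus Hu0 Hu0_us).
  split; [apply usol_solves, HT|].
  split; [intros v F Hsol; apply (sol_unique _ _ _ _ _ _ _ _ _ _ E0 v F HT Hsol)|].
  split; [apply usol_lim|]. split; [apply Esol_lim|].
  split; [exists (fun x => du_of gamma J S0 ubi (usol gamma J S0 ubi u0 Hg HJ Hus Hu0 Hu0_us x));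
          split; [apply usol_increasing | apply du_of_usol_lim]|].
  split; [intros p q; apply usol_traces_T_acc|].
  split; [split; [|split]|].
  - intros x Hx. apply usol_lt_us_iff; lra.
  - apply usol_ls.
  - intros x Hx. apply us_lt_usol_iff; lra.
  - intros ls' Hls' _ Hus' _. apply (usol_eq_us gamma J S0 ubi u0 Hg HJ Hus Hu0 Hu0_us); [lra | exact Hus'].
Qed.
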